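(* Let $\varphi\in C^2(\overline{H^2})\cap C^\infty(H^2)$ with $\varphi\ge 0$, $\varphi\not\equiv0$, $\varphi(0,y)=0$ for all $y$, and $\varphi_{xx}+\varphi_{yy}-x^{-1}\varphi_x=0$ on $H^2$. Then the function $f=x^{-2}\varphi$ (defined on $H^2$) extends to a function in $C^0(\overline{H^2})\cap C^\infty(H^2)$, this extension satisfies $f_{xx}+f_{yy}+3x^{-1}f_x=0$ on $H^2$, and $f>0$ everywhere on $\overline{H^2}$ (including on $\{x=0\}$).
   Context: $H^2=\{(x,y)\in\mathbb{R}^2: x>0\}$ is the open right half-plane and $\overline{H^2}=\{x\ge0\}$ its closure. *)

(* classical reals. Functions on R^2 are curried R -> R -> R;
   H^2 = {x > 0}, its closure = {x >= 0}. *)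
From Stdlib Require Import Reals Lra.
Open Scope R_scope.

Definition cont_at2 (f : R -> R -> R) (x y : R) : Prop :=
  forall eps, 0 < eps -> exists d, 0 < d /\
    forall x' y', Rabs (x' - x) < d -> Rabs (y' - y) < d ->
      Rabs (f x' y' - f x y) < eps.

Definition cont_H (f : R -> R -> R) : Prop :=
  forall x y, 0 < x -> cont_at2 f x y.

Definition cont_Hbar (f : R -> R -> R) : Prop :=
  forall x y, 0 <= x ->
    forall eps, 0 < eps -> exists d, 0 < d /\
      forall x' y', 0 <= x' -> Rabs (x' - x) < d -> Rabs (y' - y) < d ->
        Rabs (f x' y' - f x y) < eps.

Definition pdx_H (f g : R -> R -> R) : Prop :=
  forall x y, 0 < x -> derivable_pt_lim (fun t => f t y) x (g x y).
Definition pdy_H (f g : R -> R -> R) : Prop :=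
  forall x y, 0 < x -> derivable_pt_lim (fun t => f x t) y (g x y).

Fixpoint Ck_H (k : nat) (f : R -> R -> R) : Prop :=
  cont_H f /\
  match k with
  | O => True
  | S k' => exists gx gy, pdx_H f gx /\ pdy_H f gy /\ Ck_H k' gx /\ Ck_H k' gy
  end.

Definition Cinf_H (f : R -> R -> R) : Prop := forall k, Ck_H k f.

(* C^2 on the closed half-plane: f and all its partial derivatives of order
   <= 2 (taken in H^2) extend continuously to the closure {x >= 0}. *)
Definition C2_Hbar (f : R -> R -> R) : Prop :=
  cont_Hbar f /\
  exists fx fy fxx fxy fyx fyy,
    pdx_H f fx /\ pdy_H f fy /\
    pdx_H fx fxx /\ pdy_H fx fxy /\ pdx_H fy fyx /\ pdy_H fy fyy /\
    cont_Hbar fx /\ cont_Hbar fy /\ cont_Hbar fxx /\ cont_Hbar fxy /\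
    cont_Hbar fyx /\ cont_Hbar fyy.

From Stdlib Require Import Reals Lra.
From Coquelicot Require Import Coquelicot.
Open Scope R_scope.

(* Since [phi] and [phi_x = x Delta phi] vanish on [x = 0], two applications
   of Cauchy's mean value theorem give [phi(x, y) / x^2 = phi_xx(c, y) / 2] with
   [0 < c < x]; so [f = phi / x^2] extends continuously by [phi_xx(0, y) / 2],
   and [f >= 0].  A zero of [f] forces [phi = 0]:
   - at an interior point [(a, y)], the function [g = phi / sqrt x] satisfies
     [Delta g = (3/4) g / x^2], and comparing its circle means with the radial
     equation shows that [g] vanishes on the circle of radius [a/2] around
     [(a, y)], in particular at [(a/2, y)]; halving repeatedly and using the
     continuity of [f] gives [f(0, y) = 0];
   - at a boundary point [(0, b)], the weighted semicircle means
     [N(r) = int_0^PI phi(r sin t, b + r cos t) sin t dt] solve the Euler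
     equation [r^2 N'' = 2 N], so [N = A r^2 + B / r]; since [N >= 0] and
     [N = o(r^2)], [N = 0], hence [phi = 0] on every half-circle around [(0, b)]. *)

Lemma cont_at2_continuity_2d_pt f x y : cont_at2 f x y <-> continuity_2d_pt f x y.
Proof.
  split.
  - intros H eps. destruct (H eps (cond_pos eps)) as [d [Hd H1]].
    exists (mkposreal d Hd). exact H1.
  - intros H eps Heps. destruct (H (mkposreal eps Heps)) as [d H1].
    exists d. split; [apply cond_pos | exact H1].
Qed.

Lemma cont_H_continuity_2d_pt f x y : cont_H f -> 0 < x -> continuity_2d_pt f x y.
Proof. intros Hf Hx. apply cont_at2_continuity_2d_pt, Hf, Hx. Qed.

Lemma continuity_2d_pt_cont_H f : (forall x y, 0 < x -> continuity_2d_pt f x y) -> cont_H f.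
Proof. intros Hf x y Hx. apply cont_at2_continuity_2d_pt, Hf, Hx. Qed.

Lemma continuity_2d_pt_slice1 g x y :
  continuity_2d_pt g x y -> continuity_pt (fun t => g t y) x.
Proof.
  intros H eps Heps. destruct (H (mkposreal eps Heps)) as [d H1].
  exists d. split; [apply cond_pos|]. intros t [_ Ht].
  apply H1; [exact Ht|]. rewrite Rminus_diag, Rabs_R0. apply cond_pos.
Qed.

Lemma continuity_2d_pt_slice2 g x y :
  continuity_2d_pt g x y -> continuity_pt (fun t => g x t) y.
Proof.
  intros H eps Heps. destruct (H (mkposreal eps Heps)) as [d H1].
  exists d. split; [apply cond_pos|]. intros t [_ Ht].
  apply H1; [|exact Ht]. rewrite Rminus_diag, Rabs_R0. apply cond_pos.
Qed.

Lemma continuity_2d_pt_lift1 (g : R -> R) x y :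
  continuity_pt g x -> continuity_2d_pt (fun u _ => g u) x y.
Proof.
  intros H. apply (continuity_1d_2d_pt_comp g (fun u _ => u)); [exact H|].
  apply continuity_2d_pt_id1.
Qed.

Lemma continuity_2d_pt_lift2 (g : R -> R) x y :
  continuity_pt g y -> continuity_2d_pt (fun _ v => g v) x y.
Proof.
  intros H. apply (continuity_1d_2d_pt_comp g (fun _ v => v)); [exact H|].
  apply continuity_2d_pt_id2.
Qed.

Lemma cont_Hbar_continuity_2d_pt h x y : cont_Hbar h -> 0 < x -> continuity_2d_pt h x y.
Proof.
  intros H Hx eps. destruct (H x y (Rlt_le _ _ Hx) eps (cond_pos eps)) as [d [Hd H1]].
  exists (mkposreal _ (Rmin_pos _ _ Hd Hx)). intros u v Hu Hv. simpl in Hu, Hv.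
  assert (Hux : Rabs (u - x) < x) by (eapply Rlt_le_trans; [exact Hu | apply Rmin_r]).
  apply Rabs_def2 in Hux.
  apply H1; [lra | |]; (eapply Rlt_le_trans; [eassumption | apply Rmin_l]).
Qed.

Lemma cont_Hbar_cont_H h : cont_Hbar h -> cont_H h.
Proof.
  intros H. apply continuity_2d_pt_cont_H. intros x y. apply cont_Hbar_continuity_2d_pt, H.
Qed.

Lemma continuity_2d_pt_Hbar_at h x y : continuity_2d_pt h x y ->
  forall eps, 0 < eps -> exists d, 0 < d /\
    forall x' y', 0 <= x' -> Rabs (x' - x) < d -> Rabs (y' - y) < d ->
      Rabs (h x' y' - h x y) < eps.
Proof.
  intros H eps Heps. destruct (H (mkposreal eps Heps)) as [d H1].
  exists d. split; [apply cond_pos|]. intros x' y' _. apply H1.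
Qed.

Lemma cont_H_ext (f g : R -> R -> R) :
  (forall u v, 0 < u -> f u v = g u v) -> cont_H f -> cont_H g.
Proof.
  intros E H. apply continuity_2d_pt_cont_H. intros x y Hx.
  apply (continuity_2d_pt_ext_loc f).
  - exists (mkposreal _ Hx). intros u v Hu _. simpl in Hu. apply Rabs_def2 in Hu. apply E; lra.
  - apply cont_H_continuity_2d_pt; assumption.
Qed.

Lemma continuity_2d_pt_comp_Hbar h A B r t :
  cont_Hbar h -> continuity_2d_pt A r t -> continuity_2d_pt B r t ->
  locally_2d (fun u v => 0 <= A u v) r t ->
  continuity_2d_pt (fun u v => h (A u v) (B u v)) r t.
Proof.
  intros Hh HA HB [d0 Hpos] eps.
  assert (HA0 : 0 <= A r t) by (apply Hpos; rewrite Rminus_diag, Rabs_R0; apply cond_pos).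
  destruct (Hh (A r t) (B r t) HA0 eps (cond_pos eps)) as [d [Hd H1]].
  destruct (HA (mkposreal d Hd)) as [d1 HA1].
  destruct (HB (mkposreal d Hd)) as [d2 HB1].
  exists (mkposreal _ (Rmin_pos _ _ (cond_pos d0) (Rmin_pos _ _ (cond_pos d1) (cond_pos d2)))).
  intros u v Hu Hv. simpl in Hu, Hv.
  pose proof (Rmin_l d0 (Rmin d1 d2)). pose proof (Rmin_r d0 (Rmin d1 d2)).
  pose proof (Rmin_l d1 d2). pose proof (Rmin_r d1 d2).
  apply H1; [apply Hpos | apply HA1 | apply HB1]; lra.
Qed.

Lemma continuity_2d_pt_comp_H h A B r t :
  cont_H h -> continuity_2d_pt A r t -> continuity_2d_pt B r t -> 0 < A r t ->
  continuity_2d_pt (fun u v => h (A u v) (B u v)) r t.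
Proof.
  intros Hh HA HB Hpos eps.
  destruct (cont_H_continuity_2d_pt h (A r t) (B r t) Hh Hpos eps) as [d H1].
  destruct (HA d) as [d1 HA1]. destruct (HB d) as [d2 HB1].
  exists (mkposreal _ (Rmin_pos _ _ (cond_pos d1) (cond_pos d2))).
  intros u v Hu Hv. simpl in Hu, Hv.
  pose proof (Rmin_l d1 d2). pose proof (Rmin_r d1 d2).
  apply H1; [apply HA1 | apply HB1]; lra.
Qed.

Lemma cont_Hbar_at_right h y : cont_Hbar h -> filterlim (fun x => h x y) (at_right 0) (locally (h 0 y)).
Proof.
  intros H P [eps HP]. destruct (H 0 y (Rle_refl 0) eps (cond_pos eps)) as [d [Hd H1]].
  exists (mkposreal d Hd). intros x Hx Hx0. apply HP, H1; [lra | exact Hx |].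
  rewrite Rminus_diag, Rabs_R0. exact Hd.
Qed.

Lemma cont_Hbar_boundary_nonneg h y : cont_Hbar h -> (forall x, 0 < x -> 0 <= h x y) -> 0 <= h 0 y.
Proof.
  intros Hc Hp. destruct (Rle_or_lt 0 (h 0 y)) as [| Hn]; [assumption | exfalso].
  destruct (Hc 0 y (Rle_refl _) (- h 0 y) ltac:(lra)) as [d [Hd H1]].
  assert (A : Rabs (h (d / 2) y - h 0 y) < - h 0 y).
  { apply H1; [lra | |]; rewrite ?Rminus_0_r, ?Rminus_diag, ?Rabs_R0, ?Rabs_right; lra. }
  pose proof (Hp (d / 2) ltac:(lra)). apply Rabs_def2 in A. lra.
Qed.

Lemma continuity_pt_abs_slice h y t : cont_Hbar h -> continuity_pt (fun s => h (Rabs s) y) t.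
Proof.
  intros Hh. apply (continuity_2d_pt_slice1 (fun u v => h (Rabs u) y) t 0).
  apply (continuity_2d_pt_comp_Hbar h (fun u _ => Rabs u) (fun _ _ => y));
    [exact Hh | apply continuity_2d_pt_lift1, Rcontinuity_abs | apply continuity_2d_pt_const |].
  exists (mkposreal 1 Rlt_0_1). intros; apply Rabs_pos.
Qed.

Lemma derivable_pt_lim_eq f x l l' : derivable_pt_lim f x l -> l = l' -> derivable_pt_lim f x l'.
Proof. intros H ->; exact H. Qed.

Lemma derivable_pt_lim_lin a c r : derivable_pt_lim (fun u => a + u * c) r c.
Proof. apply is_derive_Reals. auto_derive; [exact I | ring]. Qed.

Lemma derivable_pt_lim_scal_sq K u : derivable_pt_lim (fun u => K * u ^ 2) u (2 * K * u).
Proof. apply is_derive_Reals. auto_derive; [exact I | ring]. Qed.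

Lemma derivable_pt_lim_div_pow f df x n : derivable_pt_lim f x df -> 0 < x ->
  derivable_pt_lim (fun t => f t / t ^ n) x (df / x ^ n - INR n * f x / x ^ S n).
Proof.
  intros H Hx.
  assert (Hxn : x ^ n <> 0) by (apply pow_nonzero; lra).
  eapply derivable_pt_lim_eq.
  - apply (derivable_pt_lim_div f (fun t => t ^ n) x df _ H (derivable_pt_lim_pow x n) Hxn).
  - unfold Rsqr. destruct n as [|m]; simpl pred; simpl pow.
    + simpl. field. lra.
    + assert (x ^ m <> 0) by (apply pow_nonzero; lra). rewrite S_INR. field. lra.
Qed.

Lemma derivable_pt_lim_div_const f l x c :
  derivable_pt_lim f x l -> derivable_pt_lim (fun t => f t / c) x (l / c).
Proof.
  intros H. eapply derivable_pt_lim_eq.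
  - apply (derivable_pt_lim_mult f (fun _ => / c)); [exact H | apply derivable_pt_lim_const].
  - unfold Rdiv. ring.
Qed.

Lemma derivable_pt_lim_inv_sqrt x : 0 < x ->
  derivable_pt_lim (fun t => / sqrt t) x (- / sqrt x / (2 * x)).
Proof.
  intros Hx. pose proof (sqrt_lt_R0 x Hx). pose proof (sqrt_sqrt x (Rlt_le _ _ Hx)).
  apply is_derive_Reals. auto_derive; [lra |].
  set (s := sqrt x) in *. clearbody s. subst x. field. lra.
Qed.

Lemma derivable_pt_lim_inv_sqrt_deriv x : 0 < x ->
  derivable_pt_lim (fun t => - / sqrt t / (2 * t)) x (3 / sqrt x / (4 * x ^ 2)).
Proof.
  intros Hx. pose proof (sqrt_lt_R0 x Hx). pose proof (sqrt_sqrt x (Rlt_le _ _ Hx)).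
  apply is_derive_Reals. auto_derive; [lra |].
  set (s := sqrt x) in *. clearbody s. subst x. field. lra.
Qed.

Lemma cauchy_mvt f g df dg a b : a < b ->
  (forall t, a < t < b -> derivable_pt_lim f t (df t)) ->
  (forall t, a < t < b -> derivable_pt_lim g t (dg t)) ->
  (forall t, a <= t <= b -> continuity_pt f t) ->
  (forall t, a <= t <= b -> continuity_pt g t) ->
  exists c, a < c < b /\ (g b - g a) * df c = (f b - f a) * dg c.
Proof.
  intros Hab Hf Hg Cf Cg.
  set (pr1 := fun c (P : a < c < b) => exist (fun l => derivable_pt_abs f c l) (df c) (Hf c P)).
  set (pr2 := fun c (P : a < c < b) => exist (fun l => derivable_pt_abs g c l) (dg c) (Hg c P)).
  destruct (MVT f g a b pr1 pr2 Hab Cf Cg) as [c [P E]].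
  exists c. split; [exact P | exact E].
Qed.

Lemma derivative_nonpos_nonincreasing (k dk : R -> R) a b : a < b ->
  (forall t, a < t < b -> derivable_pt_lim k t (dk t)) ->
  (forall t, a <= t <= b -> continuity_pt k t) ->
  (forall t, a < t < b -> dk t <= 0) -> k b <= k a.
Proof.
  intros Hab HD HC Hneg.
  destruct (cauchy_mvt k (fun s => s) dk (fun _ => 1) a b Hab HD) as [c [Hc E]].
  - intros; apply derivable_pt_lim_id.
  - exact HC.
  - intros; apply derivable_continuous_pt, derivable_pt_id.
  - pose proof (Hneg c Hc). nra.
Qed.

Lemma derivative_zero_constant_pos (k : R -> R) :
  (forall t, 0 < t -> derivable_pt_lim k t 0) -> forall r, 0 < r -> k r = k 1.
Proof.
  intros H.
  assert (Hle : forall a b, 0 < a < b -> k b <= k a /\ - k b <= - k a).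
  { intros a b Hab. split.
    - apply (derivative_nonpos_nonincreasing k (fun _ => 0) a b); try lra.
      + intros t Ht; apply H; lra.
      + intros t Ht; apply derivable_continuous_pt; exists 0; apply H; lra.
      + intros; lra.
    - apply (derivative_nonpos_nonincreasing (fun t => - k t) (fun _ => - 0) a b); try lra.
      + intros t Ht. apply (derivable_pt_lim_opp k), H; lra.
      + intros t Ht. apply continuity_pt_opp, derivable_continuous_pt; exists 0; apply H; lra.
      + intros; lra. }
  intros r Hr. destruct (Rtotal_order r 1) as [Hl | [-> | Hg]]; [| reflexivity |].
  - destruct (Hle r 1); lra.
  - destruct (Hle 1 r); lra.
Qed.

Lemma RInt_scal_minus (f g : R -> R) (p q a b : R) : ex_RInt f a b -> ex_RInt g a b ->
  RInt (fun t => p * f t - q * g t) a b = p * RInt f a b - q * RInt g a b.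
Proof.
  intros Hf Hg. apply is_RInt_unique.
  apply (is_RInt_minus (fun t => p * f t) (fun t => q * g t)).
  - exact (is_RInt_scal f a b p _ (RInt_correct f a b Hf)).
  - exact (is_RInt_scal g a b q _ (RInt_correct g a b Hg)).
Qed.

Lemma RInt_scal_minus3 (f g h : R -> R) (p q s a b : R) :
  ex_RInt f a b -> ex_RInt g a b -> ex_RInt h a b ->
  RInt (fun t => p * f t - q * g t - s * h t) a b = p * RInt f a b - q * RInt g a b - s * RInt h a b.
Proof.
  intros Hf Hg Hh. apply is_RInt_unique.
  apply (is_RInt_minus (fun t => p * f t - q * g t) (fun t => s * h t)).
  - apply (is_RInt_minus (fun t => p * f t) (fun t => q * g t)).
    + exact (is_RInt_scal f a b p _ (RInt_correct f a b Hf)).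
    + exact (is_RInt_scal g a b q _ (RInt_correct g a b Hg)).
  - exact (is_RInt_scal h a b s _ (RInt_correct h a b Hh)).
Qed.

Lemma ex_RInt_continuity_pt (f : R -> R) a b : (forall t, continuity_pt f t) -> ex_RInt f a b.
Proof.
  intros Hf. apply (@ex_RInt_continuous R_CompleteNormedModule).
  intros; apply continuity_pt_filterlim, Hf.
Qed.

(** Unlike [RInt_Derive], the derivative of [G] is only required on the open interval. *)
Lemma RInt_derive_open (h G : R -> R) a b : a < b -> (forall t, continuous h t) ->
  (forall t, a <= t <= b -> continuity_pt G t) ->
  (forall t, a < t < b -> derivable_pt_lim G t (h t)) ->
  RInt h a b = G b - G a.
Proof.
  intros Hab Hh HG HdG.
  assert (HI : forall t, is_derive (fun s => RInt h a s) t (h t)).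
  { intros t. apply (is_derive_RInt h (fun s => RInt h a s) a t); [| apply Hh].
    exists (mkposreal 1 Rlt_0_1). intros y _. apply (@RInt_correct R_CompleteNormedModule).
    apply (@ex_RInt_continuous R_CompleteNormedModule). intros; apply Hh. }
  destruct (cauchy_mvt (fun s => RInt h a s - G s) (fun s => s) (fun _ => 0) (fun _ => 1) a b Hab)
    as [c [_ E]].
  - intros t Ht. eapply derivable_pt_lim_eq.
    + apply (derivable_pt_lim_minus (fun s => RInt h a s) G); [apply is_derive_Reals, HI | apply HdG, Ht].
    + ring.
  - intros; apply derivable_pt_lim_id.
  - intros t Ht. apply continuity_pt_minus; [| apply HG, Ht].
    apply derivable_continuous_pt. exists (h t). apply is_derive_Reals, HI.
  - intros; apply derivable_continuous_pt, derivable_pt_id.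
  - rewrite RInt_point in E. simpl in E. unfold zero in E; simpl in E. nra.
Qed.

Lemma RInt_gt_0_at (h : R -> R) a b t0 : a < t0 < b -> (forall t, continuous h t) ->
  (forall t, a <= t <= b -> 0 <= h t) -> 0 < h t0 -> 0 < RInt h a b.
Proof.
  intros Ht0 Hc Hpos Hh0.
  destruct (proj2 (continuity_pt_filterlim h t0) (Hc t0) (h t0 / 2)) as [d [Hd Hd1]]; [lra|].
  set (e := Rmin d (Rmin (t0 - a) (b - t0)) / 2).
  pose proof (Rmin_l d (Rmin (t0 - a) (b - t0))). pose proof (Rmin_r d (Rmin (t0 - a) (b - t0))).
  pose proof (Rmin_l (t0 - a) (b - t0)). pose proof (Rmin_r (t0 - a) (b - t0)).
  assert (He : 0 < e) by (unfold e; apply Rdiv_lt_0_compat; [repeat apply Rmin_pos |]; lra).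
  assert (Hex : forall u v, ex_RInt h u v)
    by (intros; apply (@ex_RInt_continuous R_CompleteNormedModule); intros; apply Hc).
  rewrite <- (RInt_Chasles h a (t0 - e) b), <- (RInt_Chasles h (t0 - e) (t0 + e) b) by apply Hex.
  assert (0 <= RInt h a (t0 - e)) by (apply RInt_ge_0; [unfold e in *; lra | apply Hex |
    intros; apply Hpos; unfold e in *; lra]).
  assert (0 <= RInt h (t0 + e) b) by (apply RInt_ge_0; [unfold e in *; lra | apply Hex |
    intros; apply Hpos; unfold e in *; lra]).
  assert (0 < RInt h (t0 - e) (t0 + e)).
  { apply RInt_gt_0; [lra | | intros; apply Hc].
    intros x Hx. destruct (Req_dec x t0) as [-> | Hne]; [lra|].
    assert (Hclose : Rabs (h x - h t0) < h t0 / 2).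
    { apply Hd1. split; [split; [exact I | auto] |].
      simpl. unfold R_dist. apply Rabs_def1; unfold e in *; lra. }
    apply Rabs_def2 in Hclose. lra. }
  simpl. unfold plus; simpl. lra.
Qed.

Lemma is_derive_RInt_param_ball (U V : R -> R -> R) lo hi r0 d : 0 < d ->
  (forall r t, Rabs (r - r0) < d -> derivable_pt_lim (fun u => U u t) r (V r t)) ->
  (forall r t, Rabs (r - r0) < d -> continuity_2d_pt V r t) ->
  (forall r t, Rabs (r - r0) < d -> continuity_pt (fun s => U r s) t) ->
  is_derive (fun r => RInt (fun t => U r t) lo hi) r0 (RInt (fun t => V r0 t) lo hi).
Proof.
  intros Hd HD HC HU.
  assert (HDer : forall r t, Rabs (r - r0) < d -> Derive (fun u => U u t) r = V r t)
    by (intros r t Hr; apply is_derive_unique, is_derive_Reals, HD, Hr).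
  assert (Hr0 : Rabs (r0 - r0) < d) by (rewrite Rminus_diag, Rabs_R0; exact Hd).
  rewrite (RInt_ext _ (fun t => Derive (fun u => U u t) r0)) by (intros t _; symmetry; apply HDer, Hr0).
  apply (is_derive_RInt_param U lo hi r0).
  - exists (mkposreal d Hd). intros y Hy t _. exists (V y t). apply is_derive_Reals, HD, Hy.
  - intros t _. apply (continuity_2d_pt_ext_loc V); [| apply HC, Hr0].
    exists (mkposreal d Hd). intros u v Hu _. symmetry. apply HDer, Hu.
  - exists (mkposreal d Hd). intros y Hy. apply (@ex_RInt_continuous R_CompleteNormedModule).
    intros z _. apply continuity_pt_filterlim, HU, Hy.
Qed.

(** * Radial ordinary differential equations *)

(** [r m'' + m' = (r m')'], so integrating [(r m')' <= c r] twice from [0]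
    gives the bound. *)
Lemma radial_laplacian_comparison (m m1 m2 : R -> R) rho c : 0 < rho ->
  (forall r, 0 <= r <= rho -> derivable_pt_lim m r (m1 r)) ->
  (forall r, 0 <= r <= rho -> derivable_pt_lim m1 r (m2 r)) ->
  (forall r, 0 < r <= rho -> r * m2 r + m1 r <= c * r) ->
  forall r, 0 <= r <= rho -> m r <= m 0 + c * r ^ 2 / 4.
Proof.
  intros Hrho Dm Dm1 Hsub.
  assert (Dflux : forall u, 0 <= u <= rho ->
    derivable_pt_lim (fun u => u * m1 u - c / 2 * u ^ 2) u (m1 u + u * m2 u - c * u)).
  { intros u Hu. eapply derivable_pt_lim_eq.
    - apply (derivable_pt_lim_minus (fun u => u * m1 u) (fun u => c / 2 * u ^ 2));
        [apply (derivable_pt_lim_mult (fun u => u) m1); [apply derivable_pt_lim_id | apply Dm1, Hu] |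
         apply derivable_pt_lim_scal_sq].
    - field. }
  assert (Hflux : forall r, 0 < r <= rho -> m1 r <= c * r / 2).
  { intros r Hr.
    assert (Hk : r * m1 r - c / 2 * r ^ 2 <= 0 * m1 0 - c / 2 * 0 ^ 2).
    { apply (derivative_nonpos_nonincreasing (fun u => u * m1 u - c / 2 * u ^ 2)
        (fun u => m1 u + u * m2 u - c * u) 0 r); [lra | | |].
      - intros u Hu. apply Dflux. lra.
      - intros u Hu. apply derivable_continuous_pt. eexists. apply Dflux. lra.
      - intros u Hu. pose proof (Hsub u ltac:(lra)). lra. }
    apply Rmult_le_reg_l with r; [lra |]. simpl in Hk. lra. }
  intros r Hr. destruct (Rle_lt_or_eq_dec _ _ (proj1 Hr)) as [Hr0 | <-].
  2:{ simpl. lra. }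
  assert (Dmean : forall u, 0 <= u <= rho ->
    derivable_pt_lim (fun u => m u - c / 4 * u ^ 2) u (m1 u - c * u / 2)).
  { intros u Hu. eapply derivable_pt_lim_eq.
    - apply (derivable_pt_lim_minus m (fun u => c / 4 * u ^ 2)); [apply Dm, Hu | apply derivable_pt_lim_scal_sq].
    - field. }
  assert (Hk : m r - c / 4 * r ^ 2 <= m 0 - c / 4 * 0 ^ 2).
  { apply (derivative_nonpos_nonincreasing (fun u => m u - c / 4 * u ^ 2)
      (fun u => m1 u - c * u / 2) 0 r); [lra | | |].
    - intros u Hu. apply Dmean. lra.
    - intros u Hu. apply derivable_continuous_pt. eexists. apply Dmean. lra.
    - intros u Hu. pose proof (Hflux u ltac:(lra)). lra. }
  simpl in Hk. lra.
Qed.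

Lemma euler_ode_solution (N N1 N2 : R -> R) :
  (forall r, 0 < r -> derivable_pt_lim N r (N1 r)) ->
  (forall r, 0 < r -> derivable_pt_lim N1 r (N2 r)) ->
  (forall r, 0 < r -> r ^ 2 * N2 r = 2 * N r) ->
  exists A B, forall r, 0 < r -> N r = A * r ^ 2 + B / r.
Proof.
  intros D1 D2 E.
  set (w := fun r => r ^ 2 * N1 r - 2 * r * N r).
  assert (Dw : forall r, 0 < r -> derivable_pt_lim w r 0).
  { intros r Hr. eapply derivable_pt_lim_eq.
    - apply (derivable_pt_lim_minus (fun r => r ^ 2 * N1 r) (fun r => 2 * r * N r));
        [apply (derivable_pt_lim_mult (fun r => r ^ 2) N1); [apply derivable_pt_lim_pow | apply D2, Hr] |
         apply (derivable_pt_lim_mult (fun r => 2 * r) N); [| apply D1, Hr]].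
      apply is_derive_Reals. auto_derive; [exact I | reflexivity].
    - pose proof (E r Hr). simpl. lra. }
  set (k := w 1).
  set (z := fun r => N r / r ^ 2 + k / 3 / r ^ 3).
  assert (Dz : forall r, 0 < r -> derivable_pt_lim z r 0).
  { intros r Hr. eapply derivable_pt_lim_eq.
    - apply (derivable_pt_lim_plus (fun r => N r / r ^ 2) (fun r => k / 3 / r ^ 3));
        [apply (derivable_pt_lim_div_pow N (N1 r) r 2); [apply D1 |] |
         apply (derivable_pt_lim_div_pow (fun _ => k / 3) 0 r 3); [apply derivable_pt_lim_const |]];
        exact Hr.
    - pose proof (derivative_zero_constant_pos w Dw r Hr) as Hw. fold k in Hw. unfold w in Hw.
      rewrite <- Hw. simpl. field. lra. }
  exists (z 1), (- k / 3). intros r Hr.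
  pose proof (derivative_zero_constant_pos z Dz r Hr) as Hz. unfold z at 1 in Hz.
  rewrite <- Hz. field. lra.
Qed.

Lemma Rabs_le_linear_zero X C d : 0 < d -> (forall r, 0 < r < d -> Rabs X <= C * r) -> X = 0.
Proof.
  intros Hd H. destruct (Req_dec X 0) as [| HX]; [assumption | exfalso].
  pose proof (Rabs_pos_lt X HX).
  set (r := Rmin (d / 2) (Rabs X / (2 * (Rabs C + 1)))).
  pose proof (Rabs_pos C). pose proof (Rle_abs C).
  assert (Hr : 0 < r) by (apply Rmin_pos; [lra | apply Rdiv_lt_0_compat; lra]).
  assert (Hrd : r < d) by (unfold r; pose proof (Rmin_l (d / 2) (Rabs X / (2 * (Rabs C + 1)))); lra).
  assert (HrX : r * (2 * (Rabs C + 1)) <= Rabs X).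
  { pose proof (Rmin_r (d / 2) (Rabs X / (2 * (Rabs C + 1)))) as Hm. fold r in Hm.
    apply (Rmult_le_compat_r (2 * (Rabs C + 1))) in Hm; [| lra].
    replace (Rabs X / (2 * (Rabs C + 1)) * (2 * (Rabs C + 1))) with (Rabs X) in Hm by (field; lra).
    exact Hm. }
  pose proof (H r (conj Hr Hrd)). nra.
Qed.

(** Of the solutions [A r^2 + B / r], only [0] is nonnegative and [o(r^2)] at [0]. *)
Lemma euler_ode_nonneg_small_zero (N N1 N2 : R -> R) :
  (forall r, 0 < r -> derivable_pt_lim N r (N1 r)) ->
  (forall r, 0 < r -> derivable_pt_lim N1 r (N2 r)) ->
  (forall r, 0 < r -> r ^ 2 * N2 r = 2 * N r) ->
  (forall r, 0 < r -> 0 <= N r) ->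
  (forall eps, 0 < eps -> exists d, 0 < d /\ forall r, 0 < r < d -> N r <= eps * r ^ 2) ->
  forall r, 0 < r -> N r = 0.
Proof.
  intros D1 D2 E Hnn Hsmall.
  destruct (euler_ode_solution N N1 N2 D1 D2 E) as [A [B HN]].
  assert (HB : B = 0).
  { destruct (Hsmall 1 Rlt_0_1) as [d [Hd Hd1]].
    apply (Rabs_le_linear_zero B (1 + Rabs A) (Rmin d 1)); [apply Rmin_pos; lra |].
    intros r Hr. pose proof (Rmin_l d 1). pose proof (Rmin_r d 1).
    pose proof (Hd1 r ltac:(lra)) as Hup. pose proof (Hnn r ltac:(lra)) as Hlo.
    rewrite HN in Hup, Hlo by lra.
    assert (Hr2 : r ^ 2 <= 1) by (rewrite <- (pow1 2); apply pow_incr; lra).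
    assert (Rabs (B / r) <= (1 + Rabs A) * r ^ 2).
    { pose proof (Rabs_pos A). pose proof (Rle_abs A). pose proof (Rabs_maj2 A).
      pose proof (pow2_ge_0 r). apply Rabs_le. nra. }
    replace B with (r * (B / r)) by (field; lra).
    rewrite Rabs_mult, Rabs_right, Rmult_comm by lra.
    apply Rmult_le_compat_r; [lra |].
    pose proof (Rabs_pos A). assert ((1 + Rabs A) * r ^ 2 <= 1 + Rabs A) by nra. lra. }
  assert (HA0 : 0 <= A).
  { pose proof (Hnn 1 Rlt_0_1) as H1. rewrite HN, HB in H1 by lra. simpl in H1. lra. }
  assert (HA : A <= 0).
  { apply le_epsilon. intros eps Heps. destruct (Hsmall eps Heps) as [d [Hd Hd1]].
    set (r := d / 2). assert (0 < r) by (unfold r; lra).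
    pose proof (Hd1 r ltac:(unfold r; lra)) as Hr. rewrite HN, HB in Hr by lra.
    assert (0 < r ^ 2) by (apply pow_lt; lra). rewrite Rplus_0_l.
    apply (Rmult_le_reg_r (r ^ 2)); [lra |]. unfold Rdiv in Hr. nra. }
  intros r Hr. rewrite HN, HB by exact Hr. replace A with 0 by lra. field. lra.
Qed.

Lemma Rabs_between x u t : Rmin x u <= t <= Rmax x u -> Rabs (t - x) <= Rabs (u - x).
Proof.
  unfold Rmin, Rmax. intros Ht. destruct (Rle_dec x u).
  - rewrite (Rabs_right (u - x)) by lra. rewrite Rabs_right by lra. lra.
  - rewrite (Rabs_left (u - x)) by lra. unfold Rabs. destruct (Rcase_abs (t - x)); lra.
Qed.

(** Mean value theorem in [x], then the [y]-derivative along [x = x0]. *)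
Lemma differentiable_pt_lim_of_partials f fx fy x y :
  locally_2d (fun u v => derivable_pt_lim (fun t => f t v) u (fx u v)) x y ->
  continuity_2d_pt fx x y ->
  derivable_pt_lim (fun t => f x t) y (fy x y) ->
  differentiable_pt_lim f x y (fx x y) (fy x y).
Proof.
  intros [d0 Hd0] Hc Hy eps.
  assert (He2 : 0 < eps / 2) by (generalize (cond_pos eps); lra).
  destruct (Hc (mkposreal _ He2)) as [d1 Hd1].
  destruct (Hy _ He2) as [d2 Hd2].
  set (d := Rmin d0 (Rmin d1 d2)).
  assert (Hdpos : 0 < d) by (unfold d; repeat apply Rmin_pos; apply cond_pos).
  exists (mkposreal d Hdpos). intros u v Hu Hv. simpl in Hu, Hv.
  pose proof (Rmin_l d0 (Rmin d1 d2)) as Hd0m. pose proof (Rmin_r d0 (Rmin d1 d2)) as Hd12m.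
  fold d in Hd0m, Hd12m. pose proof (Rmin_l d1 d2). pose proof (Rmin_r d1 d2).
  assert (Hbetween : forall t, Rmin x u <= t <= Rmax x u -> Rabs (t - x) < d0)
    by (intros t Ht; apply Rle_lt_trans with (Rabs (u - x)); [apply Rabs_between, Ht | lra]).
  destruct (MVT_gen (fun t => f t v) x u (fun t => fx t v)) as [c [Hc1 Hc2]].
  { intros t Ht. apply is_derive_Reals, Hd0; [apply Hbetween; lra | lra]. }
  { intros t Ht. apply derivable_continuous_pt. exists (fx t v). apply Hd0; [apply Hbetween, Ht | lra]. }
  assert (Hfx : Rabs (fx c v - fx x y) < eps / 2).
  { apply Hd1; [| lra]. apply Rle_lt_trans with (Rabs (u - x)); [apply Rabs_between, Hc1 | lra]. }
  assert (Hfy : Rabs (f x v - f x y - fy x y * (v - y)) <= eps / 2 * Rabs (v - y)).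
  { destruct (Req_dec v y) as [-> | Hne].
    - rewrite !Rminus_diag, Rmult_0_r, Rminus_0_r, Rabs_R0, Rmult_0_r. lra.
    - specialize (Hd2 (v - y) ltac:(lra) ltac:(lra)). replace (y + (v - y)) with v in Hd2 by ring.
      replace (f x v - f x y - fy x y * (v - y))
        with (((f x v - f x y) / (v - y) - fy x y) * (v - y)) by (field; lra).
      rewrite Rabs_mult. apply Rmult_le_compat_r; [apply Rabs_pos | lra]. }
  replace (f u v - f x y - (fx x y * (u - x) + fy x y * (v - y)))
    with ((fx c v - fx x y) * (u - x) + (f x v - f x y - fy x y * (v - y))).
  2:{ simpl in Hc2. replace (f u v) with (f x v + (f u v - f x v)) by ring. rewrite Hc2. ring. }
  eapply Rle_trans; [apply Rabs_triang |]. rewrite Rabs_mult.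
  pose proof (Rmax_l (Rabs (u - x)) (Rabs (v - y))). pose proof (Rmax_r (Rabs (u - x)) (Rabs (v - y))).
  pose proof (Rabs_pos (u - x)). pose proof (Rabs_pos (fx c v - fx x y)). nra.
Qed.

Lemma pdx_H_locally f fx x y : pdx_H f fx -> 0 < x ->
  locally_2d (fun u v => derivable_pt_lim (fun t => f t v) u (fx u v)) x y.
Proof.
  intros H Hx. exists (mkposreal _ Hx). intros u v Hu _. simpl in Hu.
  apply H. apply Rabs_def2 in Hu. lra.
Qed.

Lemma derivable_pt_lim_comp_H f fx fy (X Y : R -> R) dX dY r :
  pdx_H f fx -> pdy_H f fy -> cont_H fx -> 0 < X r ->
  derivable_pt_lim X r dX -> derivable_pt_lim Y r dY ->
  derivable_pt_lim (fun u => f (X u) (Y u)) r (fx (X r) (Y r) * dX + fy (X r) (Y r) * dY).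
Proof.
  intros Hfx Hfy Cfx Hx HX HY. apply derivable_pt_lim_comp_2d; [| exact HX | exact HY].
  apply differentiable_pt_lim_of_partials.
  - apply pdx_H_locally; assumption.
  - apply cont_H_continuity_2d_pt; assumption.
  - apply Hfy, Hx.
Qed.

Lemma pdx_H_ext_loc (f g : R -> R -> R) gx x y : 0 < x -> (forall u v, 0 < u -> f u v = g u v) ->
  derivable_pt_lim (fun t => f t y) x gx -> derivable_pt_lim (fun t => g t y) x gx.
Proof.
  intros Hx E. apply (derivable_pt_lim_locally_ext _ _ x 0 (x + 1)); [lra |].
  intros z Hz. apply E. lra.
Qed.

Lemma pdy_H_ext_loc (f g : R -> R -> R) gy x y : 0 < x -> (forall u v, 0 < u -> f u v = g u v) ->
  derivable_pt_lim (fun t => f x t) y gy -> derivable_pt_lim (fun t => g x t) y gy.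
Proof.
  intros Hx E. apply (derivable_pt_lim_locally_ext _ _ y (y - 1) (y + 1)); [lra |].
  intros z _. apply E, Hx.
Qed.

Lemma pdx_H_unique f g1 g2 x y : pdx_H f g1 -> pdx_H f g2 -> 0 < x -> g1 x y = g2 x y.
Proof. intros H1 H2 Hx. eapply uniqueness_limite; [apply H1 | apply H2]; exact Hx. Qed.

Lemma pdy_H_unique f g1 g2 x y : pdy_H f g1 -> pdy_H f g2 -> 0 < x -> g1 x y = g2 x y.
Proof. intros H1 H2 Hx. eapply uniqueness_limite; [apply H1 | apply H2]; exact Hx. Qed.

Lemma pdx_H_ext (f1 f2 g : R -> R -> R) :
  (forall u v, 0 < u -> f1 u v = f2 u v) -> pdx_H f1 g -> pdx_H f2 g.
Proof. intros E H x y Hx. apply (pdx_H_ext_loc f1); [exact Hx | exact E | apply H, Hx]. Qed.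

Lemma pdy_H_ext (f1 f2 g : R -> R -> R) :
  (forall u v, 0 < u -> f1 u v = f2 u v) -> pdy_H f1 g -> pdy_H f2 g.
Proof. intros E H x y Hx. apply (pdy_H_ext_loc f1); [exact Hx | exact E | apply H, Hx]. Qed.

Lemma pdx_H_plus (f1 f2 g1 g2 : R -> R -> R) : pdx_H f1 g1 -> pdx_H f2 g2 ->
  pdx_H (fun x y => f1 x y + f2 x y) (fun x y => g1 x y + g2 x y).
Proof. intros H1 H2 x y Hx. apply (derivable_pt_lim_plus (fun t => f1 t y) (fun t => f2 t y)); auto. Qed.

Lemma pdy_H_plus (f1 f2 g1 g2 : R -> R -> R) : pdy_H f1 g1 -> pdy_H f2 g2 ->
  pdy_H (fun x y => f1 x y + f2 x y) (fun x y => g1 x y + g2 x y).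
Proof. intros H1 H2 x y Hx. apply (derivable_pt_lim_plus (fun t => f1 x t) (fun t => f2 x t)); auto. Qed.

Lemma pdx_H_mult (f g fx gx : R -> R -> R) : pdx_H f fx -> pdx_H g gx ->
  pdx_H (fun x y => f x y * g x y) (fun x y => fx x y * g x y + f x y * gx x y).
Proof. intros H1 H2 x y Hx. apply (derivable_pt_lim_mult (fun t => f t y) (fun t => g t y)); auto. Qed.

Lemma pdy_H_mult (f g fy gy : R -> R -> R) : pdy_H f fy -> pdy_H g gy ->
  pdy_H (fun x y => f x y * g x y) (fun x y => fy x y * g x y + f x y * gy x y).
Proof. intros H1 H2 x y Hx. apply (derivable_pt_lim_mult (fun t => f x t) (fun t => g x t)); auto. Qed.

Lemma pdx_H_mult_fun1 (f fx : R -> R -> R) (w dw : R -> R) :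
  pdx_H f fx -> (forall x, 0 < x -> derivable_pt_lim w x (dw x)) ->
  pdx_H (fun x y => f x y * w x) (fun x y => fx x y * w x + f x y * dw x).
Proof. intros Hf Hw. apply (pdx_H_mult f (fun x _ => w x)); [exact Hf | intros x y Hx; apply Hw, Hx]. Qed.

Lemma pdy_H_mult_fun1 (f fy : R -> R -> R) (w : R -> R) :
  pdy_H f fy -> pdy_H (fun x y => f x y * w x) (fun x y => fy x y * w x).
Proof.
  intros Hf x y Hx. eapply derivable_pt_lim_eq.
  - apply (derivable_pt_lim_mult (fun t => f x t) (fun _ => w x)); [apply Hf, Hx | apply derivable_pt_lim_const].
  - ring.
Qed.

Lemma cont_H_plus f g : cont_H f -> cont_H g -> cont_H (fun x y => f x y + g x y).
Proof.
  intros Hf Hg. apply continuity_2d_pt_cont_H. intros x y Hx.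
  apply continuity_2d_pt_plus; apply cont_H_continuity_2d_pt; assumption.
Qed.

Lemma cont_H_mult f g : cont_H f -> cont_H g -> cont_H (fun x y => f x y * g x y).
Proof.
  intros Hf Hg. apply continuity_2d_pt_cont_H. intros x y Hx.
  apply continuity_2d_pt_mult; apply cont_H_continuity_2d_pt; assumption.
Qed.

Lemma cont_H_fun1 (w : R -> R) : (forall x, 0 < x -> continuity_pt w x) -> cont_H (fun x _ => w x).
Proof.
  intros H. apply continuity_2d_pt_cont_H. intros x y Hx. apply continuity_2d_pt_lift1, H, Hx.
Qed.

Lemma Ck_H_pred k f : Ck_H (S k) f -> Ck_H k f.
Proof.
  revert f. induction k as [| k IH]; intros f.
  - simpl. tauto.
  - intros [Hf [gx [gy [H1 [H2 [H3 H4]]]]]]. split; [exact Hf |].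
    exists gx, gy. repeat split; try assumption; apply IH; assumption.
Qed.

Lemma Ck_H_ext k (f g : R -> R -> R) :
  (forall u v, 0 < u -> f u v = g u v) -> Ck_H k f -> Ck_H k g.
Proof.
  intros E. destruct k as [| k]; simpl.
  - intros [Hf _]. split; [eapply cont_H_ext; eassumption | exact I].
  - intros [Hf [gx [gy [H1 [H2 [H3 H4]]]]]]. split; [eapply cont_H_ext; eassumption |].
    exists gx, gy. repeat split; try assumption.
    + intros x y Hx. eapply pdx_H_ext_loc; [exact Hx | exact E | apply H1, Hx].
    + intros x y Hx. eapply pdy_H_ext_loc; [exact Hx | exact E | apply H2, Hx].
Qed.

Lemma Ck_H_plus k : forall f g, Ck_H k f -> Ck_H k g -> Ck_H k (fun x y => f x y + g x y).
Proof.
  induction k as [| k IH]; intros f g.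
  - intros [Hf _] [Hg _]. split; [apply cont_H_plus; assumption | exact I].
  - intros [Hf [fx [fy [F1 [F2 [F3 F4]]]]]] [Hg [gx [gy [G1 [G2 [G3 G4]]]]]].
    split; [apply cont_H_plus; assumption |].
    exists (fun x y => fx x y + gx x y), (fun x y => fy x y + gy x y).
    repeat split; [apply pdx_H_plus | apply pdy_H_plus | apply IH | apply IH]; assumption.
Qed.

Lemma Ck_H_mult k : forall f g, Ck_H k f -> Ck_H k g -> Ck_H k (fun x y => f x y * g x y).
Proof.
  induction k as [| k IH]; intros f g.
  - intros [Hf _] [Hg _]. split; [apply cont_H_mult; assumption | exact I].
  - intros Cf Cg. pose proof (Ck_H_pred _ _ Cf) as Cf'. pose proof (Ck_H_pred _ _ Cg) as Cg'.
    destruct Cf as [Hf [fx [fy [F1 [F2 [F3 F4]]]]]], Cg as [Hg [gx [gy [G1 [G2 [G3 G4]]]]]].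
    split; [apply cont_H_mult; assumption |].
    exists (fun x y => fx x y * g x y + f x y * gx x y), (fun x y => fy x y * g x y + f x y * gy x y).
    repeat split; [apply pdx_H_mult | apply pdy_H_mult | apply Ck_H_plus; apply IH ..]; assumption.
Qed.

Lemma Ck_H_inv_pow k : forall c n, Ck_H k (fun x _ => c / x ^ n).
Proof.
  assert (Hcont : forall c n, cont_H (fun x _ => c / x ^ n)).
  { intros c n. apply cont_H_fun1. intros x Hx.
    apply continuity_pt_div; [apply continuity_pt_const; intros u v; reflexivity | |
      apply pow_nonzero; lra].
    apply derivable_continuous_pt, derivable_pt_pow. }
  induction k as [| k IH]; intros c n; split; [apply Hcont | exact I | apply Hcont |].
  (* The [y]-derivative [0] is written [0 / x ^ 0] to stay in the family. *)
  exists (fun x _ => - INR n * c / x ^ S n), (fun x _ => 0 / x ^ 0).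
  repeat split; try apply IH.
  - intros x y Hx. eapply derivable_pt_lim_eq.
    + apply (derivable_pt_lim_div_pow (fun _ => c) 0 x n (derivable_pt_lim_const c x) Hx).
    + field. split; apply pow_nonzero; lra.
  - intros x y Hx. eapply derivable_pt_lim_eq; [apply derivable_pt_lim_const |]. simpl. field.
Qed.

(** * Circle means of a [C^2] function *)

Record C2_H (g gx gy gxx gxy gyx gyy : R -> R -> R) : Prop := {
  C2_dx : pdx_H g gx; C2_dy : pdy_H g gy;
  C2_dxx : pdx_H gx gxx; C2_dxy : pdy_H gx gxy; C2_dyx : pdx_H gy gyx; C2_dyy : pdy_H gy gyy;
  C2_c : cont_H g; C2_cx : cont_H gx; C2_cy : cont_H gy;
  C2_cxx : cont_H gxx; C2_cxy : cont_H gxy; C2_cyx : cont_H gyx; C2_cyy : cont_H gyy }.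

Ltac C2_fact :=
  match goal with
  | H : C2_H _ _ _ _ _ _ _ |- _ =>
      first [ exact (C2_dx _ _ _ _ _ _ _ H) | exact (C2_dy _ _ _ _ _ _ _ H)
            | exact (C2_dxx _ _ _ _ _ _ _ H) | exact (C2_dxy _ _ _ _ _ _ _ H)
            | exact (C2_dyx _ _ _ _ _ _ _ H) | exact (C2_dyy _ _ _ _ _ _ _ H)
            | exact (C2_c _ _ _ _ _ _ _ H) | exact (C2_cx _ _ _ _ _ _ _ H)
            | exact (C2_cy _ _ _ _ _ _ _ H) | exact (C2_cxx _ _ _ _ _ _ _ H)
            | exact (C2_cxy _ _ _ _ _ _ _ H) | exact (C2_cyx _ _ _ _ _ _ _ H)
            | exact (C2_cyy _ _ _ _ _ _ _ H) ]
  end.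

Definition circle_mean (u : R -> R -> R) (a b r : R) : R :=
  RInt (fun t => u (a + r * cos t) (b + r * sin t)) 0 (2 * PI).

Definition circle_flux (ux uy : R -> R -> R) (a b r : R) : R :=
  RInt (fun t => cos t * ux (a + r * cos t) (b + r * sin t)
               + sin t * uy (a + r * cos t) (b + r * sin t)) 0 (2 * PI).

Definition circle_hessian (uxx uxy uyx uyy : R -> R -> R) (a b r : R) : R :=
  RInt (fun t => cos t * (cos t * uxx (a + r * cos t) (b + r * sin t)
                        + sin t * uxy (a + r * cos t) (b + r * sin t))
               + sin t * (cos t * uyx (a + r * cos t) (b + r * sin t)
                        + sin t * uyy (a + r * cos t) (b + r * sin t))) 0 (2 * PI).

Lemma polar_x_pos a r t : Rabs r < a -> 0 < a + r * cos t.
Proof.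
  intros H. assert (Rabs (r * cos t) <= Rabs r).
  { rewrite Rabs_mult. rewrite <- (Rmult_1_r (Rabs r)) at 2.
    apply Rmult_le_compat_l; [apply Rabs_pos | apply Rabs_le, COS_bound]. }
  pose proof (Rabs_maj2 (r * cos t)). lra.
Qed.

Lemma continuity_2d_pt_polar h a b r t : cont_H h -> 0 < a + r * cos t ->
  continuity_2d_pt (fun u v => h (a + u * cos v) (b + u * sin v)) r t.
Proof.
  intros H Hp. apply continuity_2d_pt_comp_H; [exact H | | | exact Hp];
    apply continuity_2d_pt_plus; try apply continuity_2d_pt_const;
    apply continuity_2d_pt_mult; try apply continuity_2d_pt_id1;
    apply continuity_2d_pt_lift2; [apply continuity_cos | apply continuity_sin].
Qed.

Lemma continuity_pt_polar h a b r t : cont_H h -> Rabs r < a ->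
  continuity_pt (fun v => h (a + r * cos v) (b + r * sin v)) t.
Proof.
  intros H Hr. apply (continuity_2d_pt_slice2 (fun u v => h (a + u * cos v) (b + u * sin v))).
  apply continuity_2d_pt_polar; [exact H | apply polar_x_pos, Hr].
Qed.

Lemma derivable_pt_lim_polar_r h hx hy a b r t :
  pdx_H h hx -> pdy_H h hy -> cont_H hx -> Rabs r < a ->
  derivable_pt_lim (fun u => h (a + u * cos t) (b + u * sin t)) r
    (cos t * hx (a + r * cos t) (b + r * sin t) + sin t * hy (a + r * cos t) (b + r * sin t)).
Proof.
  intros H1 H2 H3 Hr. eapply derivable_pt_lim_eq.
  - apply (derivable_pt_lim_comp_H h hx hy (fun u => a + u * cos t) (fun u => b + u * sin t));
      try assumption; [apply polar_x_pos, Hr | apply derivable_pt_lim_lin | apply derivable_pt_lim_lin].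
  - ring.
Qed.

Lemma derivable_pt_lim_polar_t h hx hy a b r t :
  pdx_H h hx -> pdy_H h hy -> cont_H hx -> Rabs r < a ->
  derivable_pt_lim (fun v => h (a + r * cos v) (b + r * sin v)) t
    (- r * sin t * hx (a + r * cos t) (b + r * sin t) + r * cos t * hy (a + r * cos t) (b + r * sin t)).
Proof.
  intros H1 H2 H3 Hr. eapply derivable_pt_lim_eq.
  - apply (derivable_pt_lim_comp_H h hx hy (fun v => a + r * cos v) (fun v => b + r * sin v));
      try assumption; [apply polar_x_pos, Hr | |];
      apply is_derive_Reals; auto_derive; try exact I; reflexivity.
  - ring.
Qed.

Ltac continuity_pt_polar :=
  repeat first [ apply continuity_pt_plus | apply continuity_pt_minus | apply continuity_pt_mult
    | apply continuity_pt_opp | apply continuity_cos | apply continuity_sin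
    | apply continuity_pt_polar; [C2_fact | assumption]
    | apply continuity_pt_const; intros ?u ?v; reflexivity ].

Section CircleMeans.

Variables g gx gy gxx gxy gyx gyy : R -> R -> R.
Hypothesis g_C2 : C2_H g gx gy gxx gxy gyx gyy.
Variables a b : R.

Lemma continuity_2d_pt_polar_shift r0 r t (h : R -> R -> R) : cont_H h ->
  Rabs (r - r0) < a - Rabs r0 -> continuity_2d_pt (fun u v => h (a + u * cos v) (b + u * sin v)) r t.
Proof.
  intros Hh Hr. apply continuity_2d_pt_polar; [exact Hh |]. apply polar_x_pos.
  replace r with (r - r0 + r0) by ring. pose proof (Rabs_triang (r - r0) r0). lra.
Qed.

Lemma is_derive_circle_mean r0 : Rabs r0 < a ->
  is_derive (circle_mean g a b) r0 (circle_flux gx gy a b r0).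
Proof.
  intros Hr0. unfold circle_mean, circle_flux.
  apply (is_derive_RInt_param_ball (fun r t => g (a + r * cos t) (b + r * sin t))
     (fun r t => cos t * gx (a + r * cos t) (b + r * sin t) + sin t * gy (a + r * cos t) (b + r * sin t))
     0 (2 * PI) r0 (a - Rabs r0)); [lra | | |]; intros r t Hr.
  - apply derivable_pt_lim_polar_r; try C2_fact.
    replace r with (r - r0 + r0) by ring. pose proof (Rabs_triang (r - r0) r0). lra.
  - apply continuity_2d_pt_plus; apply continuity_2d_pt_mult;
      try (apply continuity_2d_pt_polar_shift with r0; [C2_fact | exact Hr]);
      apply continuity_2d_pt_lift2; [apply continuity_cos | apply continuity_sin].
  - apply (continuity_2d_pt_slice2 (fun u v => g (a + u * cos v) (b + u * sin v))).
    apply continuity_2d_pt_polar_shift with r0; [C2_fact | exact Hr].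
Qed.

Lemma is_derive_circle_flux r0 : Rabs r0 < a ->
  is_derive (circle_flux gx gy a b) r0 (circle_hessian gxx gxy gyx gyy a b r0).
Proof.
  intros Hr0. unfold circle_flux, circle_hessian.
  apply (is_derive_RInt_param_ball (fun r t => cos t * gx (a + r * cos t) (b + r * sin t)
     + sin t * gy (a + r * cos t) (b + r * sin t))
     (fun r t => cos t * (cos t * gxx (a + r * cos t) (b + r * sin t) + sin t * gxy (a + r * cos t) (b + r * sin t))
       + sin t * (cos t * gyx (a + r * cos t) (b + r * sin t) + sin t * gyy (a + r * cos t) (b + r * sin t)))
     0 (2 * PI) r0 (a - Rabs r0)); [lra | | |]; intros r t Hr.
  - assert (Ha : Rabs r < a).
    { replace r with (r - r0 + r0) by ring. pose proof (Rabs_triang (r - r0) r0). lra. }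
    apply (derivable_pt_lim_plus (fun u => cos t * gx (a + u * cos t) (b + u * sin t))
                                 (fun u => sin t * gy (a + u * cos t) (b + u * sin t)));
      apply derivable_pt_lim_scal, derivable_pt_lim_polar_r; try C2_fact; exact Ha.
  - repeat first [apply continuity_2d_pt_plus | apply continuity_2d_pt_mult
      | apply continuity_2d_pt_lift2, continuity_cos | apply continuity_2d_pt_lift2, continuity_sin
      | apply continuity_2d_pt_polar_shift with r0; [C2_fact | exact Hr]].
  - apply (continuity_2d_pt_slice2 (fun u v => cos v * gx (a + u * cos v) (b + u * sin v)
      + sin v * gy (a + u * cos v) (b + u * sin v))).
    repeat first [apply continuity_2d_pt_plus | apply continuity_2d_pt_mult
      | apply continuity_2d_pt_lift2, continuity_cos | apply continuity_2d_pt_lift2, continuity_sin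
      | apply continuity_2d_pt_polar_shift with r0; [C2_fact | exact Hr]].
Qed.

(** Polar form of the Laplacian: the angular term [d^2/dt^2] integrates to
    zero over a full period. *)
Lemma circle_mean_laplacian r : Rabs r < a ->
  r ^ 2 * circle_hessian gxx gxy gyx gyy a b r + r * circle_flux gx gy a b r
  = r ^ 2 * circle_mean (fun x y => gxx x y + gyy x y) a b r.
Proof.
  intros Hr. unfold circle_hessian, circle_flux, circle_mean.
  set (W := fun t => cos t * (cos t * gxx (a + r * cos t) (b + r * sin t)
                             + sin t * gxy (a + r * cos t) (b + r * sin t))
                   + sin t * (cos t * gyx (a + r * cos t) (b + r * sin t)
                             + sin t * gyy (a + r * cos t) (b + r * sin t))).
  set (V := fun t => cos t * gx (a + r * cos t) (b + r * sin t) + sin t * gy (a + r * cos t) (b + r * sin t)).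
  set (L := fun t => gxx (a + r * cos t) (b + r * sin t) + gyy (a + r * cos t) (b + r * sin t)).
  set (G := fun t => - r * sin t * gx (a + r * cos t) (b + r * sin t)
                     + r * cos t * gy (a + r * cos t) (b + r * sin t)).
  assert (CW : forall t, continuity_pt W t) by (intro t; unfold W; continuity_pt_polar).
  assert (CV : forall t, continuity_pt V t) by (intro t; unfold V; continuity_pt_polar).
  assert (CL : forall t, continuity_pt L t) by (intro t; unfold L; continuity_pt_polar).
  assert (Hangular : RInt (fun t => r ^ 2 * L t - r ^ 2 * W t - r * V t) 0 (2 * PI) = G (2 * PI) - G 0).
  { apply RInt_derive_open; [pose proof PI_RGT_0; lra | | |].
    - intro t. apply continuity_pt_filterlim.
      repeat first [apply continuity_pt_minus | apply continuity_pt_mult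
        | apply continuity_pt_const; intros ? ?; reflexivity]; auto.
    - intros t _. unfold G. continuity_pt_polar.
    - intros t _. unfold G, L, W, V. eapply derivable_pt_lim_eq.
      + apply (derivable_pt_lim_plus (fun t => - r * sin t * gx (a + r * cos t) (b + r * sin t))
                                     (fun t => r * cos t * gy (a + r * cos t) (b + r * sin t)));
        [apply (derivable_pt_lim_mult (fun t => - r * sin t)) |
         apply (derivable_pt_lim_mult (fun t => r * cos t))];
        try (apply derivable_pt_lim_polar_t; try C2_fact; exact Hr);
        apply is_derive_Reals; auto_derive; try exact I; reflexivity.
      + pose proof (sin2_cos2 t) as E. unfold Rsqr in E.
        apply Rminus_diag_uniq.
        transitivity (r ^ 2 * (gxx (a + r * cos t) (b + r * sin t) + gyy (a + r * cos t) (b + r * sin t))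
                      * (sin t * sin t + cos t * cos t - 1)); [ring | rewrite E; ring]. }
  assert (HG : G (2 * PI) = G 0) by (unfold G; rewrite cos_2PI, sin_2PI, cos_0, sin_0; reflexivity).
  rewrite HG, Rminus_diag, RInt_scal_minus3 in Hangular by (apply ex_RInt_continuity_pt; assumption).
  fold W V L. lra.
Qed.

Lemma circle_mean_nonpos_vanishes r t : (forall x y, 0 < x -> 0 <= g x y) -> Rabs r < a ->
  circle_mean g a b r <= 0 -> 0 < t < 2 * PI -> g (a + r * cos t) (b + r * sin t) = 0.
Proof.
  intros Hnn Hr Hm Ht.
  destruct (Rle_lt_or_eq_dec _ _ (Hnn _ (b + r * sin t) (polar_x_pos a r t Hr))) as [Hpos | Hz];
    [exfalso | auto].
  enough (0 < circle_mean g a b r) by lra.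
  apply (RInt_gt_0_at _ 0 (2 * PI) t Ht); [| | exact Hpos].
  - intro s. apply continuity_pt_filterlim, continuity_pt_polar; [C2_fact | exact Hr].
  - intros s _. apply Hnn, polar_x_pos, Hr.
Qed.

Lemma circle_mean_laplacian_le rho K r :
  (forall x y, 0 < x -> 0 <= g x y) -> rho < a -> 0 <= r <= rho ->
  (forall x y, (x - a) ^ 2 + (y - b) ^ 2 <= rho ^ 2 -> gxx x y + gyy x y <= K * g x y) ->
  circle_mean (fun x y => gxx x y + gyy x y) a b r <= K * circle_mean g a b r.
Proof.
  intros Hnn Hrho Hr Hsub.
  assert (Hra : Rabs r < a) by (rewrite Rabs_right; lra).
  unfold circle_mean.
  assert (Ex : forall h, cont_H h -> ex_RInt (fun t => h (a + r * cos t) (b + r * sin t)) 0 (2 * PI))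
    by (intros h Hh; apply ex_RInt_continuity_pt; intro t; apply continuity_pt_polar; assumption).
  assert (Exg : ex_RInt (fun t => g (a + r * cos t) (b + r * sin t)) 0 (2 * PI))
    by (apply (Ex g); C2_fact).
  apply Rle_trans with (RInt (fun t => K * g (a + r * cos t) (b + r * sin t)) 0 (2 * PI));
    [| right; exact (RInt_scal _ _ _ K Exg)].
  apply RInt_le; [pose proof PI_RGT_0; lra | | apply (ex_RInt_scal _ _ _ K Exg) |].
  { apply (Ex (fun x y => gxx x y + gyy x y)), cont_H_plus; C2_fact. }
  intros t _. apply Hsub.
  pose proof (sin2_cos2 t) as E. unfold Rsqr in E.
  replace (a + r * cos t - a) with (r * cos t) by ring.
  replace (b + r * sin t - b) with (r * sin t) by ring.
  replace ((r * cos t) ^ 2 + (r * sin t) ^ 2) with (r ^ 2 * (sin t * sin t + cos t * cos t)) by ring.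
  rewrite E, Rmult_1_r. apply pow_incr. lra.
Qed.

(** The mean [m] satisfies [(r m')' <= K r max m], hence
    [max m <= (K rho^2 / 4) max m]. *)
Lemma circle_mean_subsolution_nonpos rho K :
  (forall x y, 0 < x -> 0 <= g x y) -> 0 < rho < a -> 0 <= K -> K * rho ^ 2 < 4 ->
  (forall x y, (x - a) ^ 2 + (y - b) ^ 2 <= rho ^ 2 -> gxx x y + gyy x y <= K * g x y) ->
  g a b = 0 -> circle_mean g a b rho <= 0.
Proof.
  intros Hnn Hrho HK HKrho Hsub Hab.
  set (m := circle_mean g a b).
  assert (Hra : forall r, 0 <= r <= rho -> Rabs r < a) by (intros r Hr; rewrite Rabs_right; lra).
  assert (Dm : forall r, 0 <= r <= rho -> derivable_pt_lim m r (circle_flux gx gy a b r))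
    by (intros r Hr; apply is_derive_Reals, is_derive_circle_mean, Hra, Hr).
  assert (Dm1 : forall r, 0 <= r <= rho ->
    derivable_pt_lim (circle_flux gx gy a b) r (circle_hessian gxx gxy gyx gyy a b r))
    by (intros r Hr; apply is_derive_Reals, is_derive_circle_flux, Hra, Hr).
  assert (Hm0 : m 0 = 0).
  { unfold m, circle_mean. rewrite (RInt_ext _ (fun _ => g a b)), RInt_const, Hab.
    - apply Rmult_0_r.
    - intros t _. f_equal; ring. }
  destruct (continuity_ab_maj m 0 rho ltac:(lra)) as [Mx [Hmax HMx]].
  { intros r Hr. apply derivable_continuous_pt. eexists. apply Dm, Hr. }
  assert (HM0 : 0 <= m Mx) by (rewrite <- Hm0; apply Hmax; lra).
  assert (Hradial : forall r, 0 < r <= rho ->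
    r * circle_hessian gxx gxy gyx gyy a b r + circle_flux gx gy a b r <= K * m Mx * r).
  { intros r Hr. apply Rmult_le_reg_l with r; [lra |].
    pose proof (circle_mean_laplacian r (Hra r ltac:(lra))) as E.
    pose proof (circle_mean_laplacian_le rho K r Hnn ltac:(lra) ltac:(lra) Hsub) as Hle.
    pose proof (Hmax r ltac:(lra)). fold m in E, Hle.
    assert (K * m r <= K * m Mx) by (apply Rmult_le_compat_l; assumption).
    assert (0 <= r ^ 2) by apply pow2_ge_0.
    replace (r * (r * circle_hessian gxx gxy gyx gyy a b r + circle_flux gx gy a b r))
      with (r ^ 2 * circle_hessian gxx gxy gyx gyy a b r + r * circle_flux gx gy a b r) by ring.
    rewrite E. replace (r * (K * m Mx * r)) with (r ^ 2 * (K * m Mx)) by ring.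
    apply Rmult_le_compat_l; lra. }
  pose proof (radial_laplacian_comparison m _ _ rho (K * m Mx) (proj1 Hrho) Dm Dm1 Hradial Mx HMx) as HMxle.
  rewrite Hm0 in HMxle.
  assert (HKMx : K * Mx ^ 2 < 4).
  { assert (HMxrho : Mx ^ 2 <= rho ^ 2) by (apply pow_incr; lra).
    pose proof (Rmult_le_compat_l K _ _ HK HMxrho). lra. }
  assert (m Mx * (4 - K * Mx ^ 2) <= 0) by lra.
  assert (m Mx <= 0) by nra.
  pose proof (Hmax rho ltac:(lra)). fold m. lra.
Qed.

End CircleMeans.

(** * Semicircle means centred on the boundary *)

(** The semicircle of radius [r] around [(0, b)] is parametrised by
    [(r |sin t|, b + r cos t)], [0 <= t <= PI]; taking [|sin t|] rather than
    [sin t] keeps the point in the closed half-plane for every [t], so the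
    integrands are jointly continuous up to the endpoints [0] and [PI].  The
    weight [|sin t| = x / r] is what turns [Delta - (1/x) d/dx] into the Euler
    operator [r^2 d^2/dr^2 - 2] (see [semicircle_euler_identity]). *)
Definition semicircle_mean (u : R -> R -> R) (b r : R) : R :=
  RInt (fun t => u (r * Rabs (sin t)) (b + r * cos t) * Rabs (sin t)) 0 PI.

Definition semicircle_flux (ux uy : R -> R -> R) (b r : R) : R :=
  RInt (fun t => (Rabs (sin t) * ux (r * Rabs (sin t)) (b + r * cos t)
                 + cos t * uy (r * Rabs (sin t)) (b + r * cos t)) * Rabs (sin t)) 0 PI.

Definition semicircle_hessian (uxx uxy uyx uyy : R -> R -> R) (b r : R) : R :=
  RInt (fun t => (Rabs (sin t) * (Rabs (sin t) * uxx (r * Rabs (sin t)) (b + r * cos t)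
                                  + cos t * uxy (r * Rabs (sin t)) (b + r * cos t))
                 + cos t * (Rabs (sin t) * uyx (r * Rabs (sin t)) (b + r * cos t)
                                  + cos t * uyy (r * Rabs (sin t)) (b + r * cos t)))
                 * Rabs (sin t)) 0 PI.

Lemma continuity_pt_abs_sin t : continuity_pt (fun s => Rabs (sin s)) t.
Proof. apply (continuity_pt_comp sin Rabs); [apply continuity_sin | apply Rcontinuity_abs]. Qed.

Lemma continuity_2d_pt_semicircle h b r t : cont_Hbar h -> 0 < r ->
  continuity_2d_pt (fun u v => h (u * Rabs (sin v)) (b + u * cos v)) r t.
Proof.
  intros Hh Hr. apply continuity_2d_pt_comp_Hbar; [exact Hh | | |].
  - apply continuity_2d_pt_mult; [apply continuity_2d_pt_id1 |].
    apply continuity_2d_pt_lift2, continuity_pt_abs_sin.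
  - apply continuity_2d_pt_plus; [apply continuity_2d_pt_const |].
    apply continuity_2d_pt_mult; [apply continuity_2d_pt_id1 | apply continuity_2d_pt_lift2, continuity_cos].
  - exists (mkposreal r Hr). intros u v Hu _. simpl in Hu. apply Rabs_def2 in Hu.
    apply Rmult_le_pos; [lra | apply Rabs_pos].
Qed.

Lemma continuity_pt_semicircle h b r t : cont_Hbar h -> 0 < r ->
  continuity_pt (fun v => h (r * Rabs (sin v)) (b + r * cos v)) t.
Proof.
  intros Hh Hr. apply (continuity_2d_pt_slice2 (fun u v => h (u * Rabs (sin v)) (b + u * cos v))).
  apply continuity_2d_pt_semicircle; assumption.
Qed.

Ltac continuity_semicircle :=
  repeat first [ apply continuity_2d_pt_plus | apply continuity_2d_pt_mult
    | apply continuity_2d_pt_lift2, continuity_cos | apply continuity_2d_pt_lift2, continuity_pt_abs_sin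
    | apply continuity_2d_pt_semicircle; [assumption | assumption] ].

(** Along a ray with [sin t = 0] the integrand vanishes identically, so the
    radial derivative only needs the chain rule in the open half-plane. *)
Lemma derivable_pt_lim_semicircle_r h hx hy b r t :
  pdx_H h hx -> pdy_H h hy -> cont_Hbar hx -> 0 < r ->
  derivable_pt_lim (fun u => h (u * Rabs (sin t)) (b + u * cos t) * Rabs (sin t)) r
    ((Rabs (sin t) * hx (r * Rabs (sin t)) (b + r * cos t) + cos t * hy (r * Rabs (sin t)) (b + r * cos t))
     * Rabs (sin t)).
Proof.
  intros Hhx Hhy Chx Hr. destruct (Rle_lt_or_eq_dec _ _ (Rabs_pos (sin t))) as [Hs | <-].
  - eapply derivable_pt_lim_eq.
    + apply (derivable_pt_lim_mult (fun u => h (u * Rabs (sin t)) (b + u * cos t)) (fun _ => Rabs (sin t)));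
        [| apply derivable_pt_lim_const].
      apply (derivable_pt_lim_comp_H h hx hy (fun u => u * Rabs (sin t)) (fun u => b + u * cos t));
        try assumption; [apply cont_Hbar_cont_H, Chx | apply Rmult_lt_0_compat; assumption | |
        apply derivable_pt_lim_lin].
      eapply derivable_pt_lim_ext; [| apply (derivable_pt_lim_lin 0 (Rabs (sin t)) r)].
      intro; simpl; ring.
    + ring.
  - eapply derivable_pt_lim_eq; [eapply derivable_pt_lim_ext; [| apply (derivable_pt_lim_const 0 r)] |].
    + intro u. unfold fct_cte. ring.
    + ring.
Qed.

Lemma derivable_pt_lim_semicircle_t h hx hy b r t :
  pdx_H h hx -> pdy_H h hy -> cont_Hbar hx -> 0 < r -> 0 < t < PI ->
  derivable_pt_lim (fun v => h (r * sin v) (b + r * cos v)) t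
    (r * cos t * hx (r * sin t) (b + r * cos t) - r * sin t * hy (r * sin t) (b + r * cos t)).
Proof.
  intros Hhx Hhy Chx Hr Ht. eapply derivable_pt_lim_eq.
  - apply (derivable_pt_lim_comp_H h hx hy (fun v => r * sin v) (fun v => b + r * cos v));
      try assumption; [apply cont_Hbar_cont_H, Chx | apply Rmult_lt_0_compat; [exact Hr | apply sin_gt_0; lra] | |];
      apply is_derive_Reals; auto_derive; try exact I; reflexivity.
  - ring.
Qed.

Section SemicircleMeans.

Variables u ux uy uxx uxy uyx uyy : R -> R -> R.
Hypotheses (u_dx : pdx_H u ux) (u_dy : pdy_H u uy) (ux_dx : pdx_H ux uxx) (ux_dy : pdy_H ux uxy)
  (uy_dx : pdx_H uy uyx) (uy_dy : pdy_H uy uyy).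
Hypotheses (u_cont : cont_Hbar u) (ux_cont : cont_Hbar ux) (uy_cont : cont_Hbar uy)
  (uxx_cont : cont_Hbar uxx) (uxy_cont : cont_Hbar uxy) (uyx_cont : cont_Hbar uyx)
  (uyy_cont : cont_Hbar uyy).
Variable b : R.

Lemma is_derive_semicircle_mean r0 : 0 < r0 ->
  is_derive (semicircle_mean u b) r0 (semicircle_flux ux uy b r0).
Proof.
  intros Hr0. unfold semicircle_mean, semicircle_flux.
  apply (is_derive_RInt_param_ball (fun r t => u (r * Rabs (sin t)) (b + r * cos t) * Rabs (sin t))
    (fun r t => (Rabs (sin t) * ux (r * Rabs (sin t)) (b + r * cos t)
                 + cos t * uy (r * Rabs (sin t)) (b + r * cos t)) * Rabs (sin t)) 0 PI r0 r0 Hr0);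
    intros r t Hr; assert (Hp : 0 < r) by (apply Rabs_def2 in Hr; lra).
  - apply derivable_pt_lim_semicircle_r; assumption.
  - continuity_semicircle.
  - apply (continuity_2d_pt_slice2 (fun r v => u (r * Rabs (sin v)) (b + r * cos v) * Rabs (sin v))).
    continuity_semicircle.
Qed.

Lemma is_derive_semicircle_flux r0 : 0 < r0 ->
  is_derive (semicircle_flux ux uy b) r0 (semicircle_hessian uxx uxy uyx uyy b r0).
Proof.
  intros Hr0. unfold semicircle_flux, semicircle_hessian.
  apply (is_derive_RInt_param_ball
    (fun r t => (Rabs (sin t) * ux (r * Rabs (sin t)) (b + r * cos t)
                 + cos t * uy (r * Rabs (sin t)) (b + r * cos t)) * Rabs (sin t))
    (fun r t => (Rabs (sin t) * (Rabs (sin t) * uxx (r * Rabs (sin t)) (b + r * cos t)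
                                 + cos t * uxy (r * Rabs (sin t)) (b + r * cos t))
                 + cos t * (Rabs (sin t) * uyx (r * Rabs (sin t)) (b + r * cos t)
                                 + cos t * uyy (r * Rabs (sin t)) (b + r * cos t))) * Rabs (sin t))
    0 PI r0 r0 Hr0); intros r t Hr; assert (Hp : 0 < r) by (apply Rabs_def2 in Hr; lra).
  - eapply derivable_pt_lim_eq.
    + apply (derivable_pt_lim_ext
        (fun r => Rabs (sin t) * (ux (r * Rabs (sin t)) (b + r * cos t) * Rabs (sin t))
                  + cos t * (uy (r * Rabs (sin t)) (b + r * cos t) * Rabs (sin t)))); [intro; ring |].
      apply (derivable_pt_lim_plus
        (fun r => Rabs (sin t) * (ux (r * Rabs (sin t)) (b + r * cos t) * Rabs (sin t)))
        (fun r => cos t * (uy (r * Rabs (sin t)) (b + r * cos t) * Rabs (sin t))));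
        apply derivable_pt_lim_scal, derivable_pt_lim_semicircle_r; eassumption.
    + ring.
  - continuity_semicircle.
  - apply (continuity_2d_pt_slice2 (fun r v => (Rabs (sin v) * ux (r * Rabs (sin v)) (b + r * cos v)
      + cos v * uy (r * Rabs (sin v)) (b + r * cos v)) * Rabs (sin v))).
    continuity_semicircle.
Qed.

End SemicircleMeans.

(** The boundary value [phi_xx(0, y) / 2] is the limit of [phi / x^2] (l'Hopital). *)
Definition x2_quotient (phi pxx : R -> R -> R) (x y : R) : R :=
  if Rle_dec x 0 then pxx 0 y / 2 else phi x y / x ^ 2.

Lemma x2_quotient_pos phi pxx x y : 0 < x -> x2_quotient phi pxx x y = phi x y / x ^ 2.
Proof. intros Hx. unfold x2_quotient. destruct (Rle_dec x 0); [lra | reflexivity]. Qed.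

Lemma x2_quotient_0 phi pxx y : x2_quotient phi pxx 0 y = pxx 0 y / 2.
Proof. unfold x2_quotient. destruct (Rle_dec 0 0); [reflexivity | lra]. Qed.

Lemma x2_quotient_Cinf phi pxx : Cinf_H phi -> Cinf_H (x2_quotient phi pxx).
Proof.
  intros Hphi k. apply (Ck_H_ext k (fun x y => phi x y * (1 / x ^ 2))).
  - intros x y Hx. rewrite x2_quotient_pos by exact Hx. unfold Rdiv. ring.
  - apply Ck_H_mult; [apply Hphi | apply (Ck_H_inv_pow k 1 2)].
Qed.

Section HalfPlaneSolution.

Variables phi px py pxx pxy pyx pyy : R -> R -> R.
Hypotheses (phi_dx : pdx_H phi px) (phi_dy : pdy_H phi py) (px_dx : pdx_H px pxx)
  (px_dy : pdy_H px pxy) (py_dx : pdx_H py pyx) (py_dy : pdy_H py pyy).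
Hypotheses (phi_cont : cont_Hbar phi) (px_cont : cont_Hbar px) (py_cont : cont_Hbar py)
  (pxx_cont : cont_Hbar pxx) (pxy_cont : cont_Hbar pxy) (pyx_cont : cont_Hbar pyx)
  (pyy_cont : cont_Hbar pyy).
Hypothesis phi_pde : forall x y, 0 < x -> pxx x y + pyy x y - / x * px x y = 0.
Hypothesis phi_nonneg : forall x y, 0 <= x -> 0 <= phi x y.
Hypothesis phi_boundary : forall y, phi 0 y = 0.

Lemma px_eq_x_laplacian x y : 0 < x -> px x y = x * (pxx x y + pyy x y).
Proof.
  intros Hx. pose proof (phi_pde x y Hx).
  apply (Rmult_eq_reg_l (/ x)); [| apply Rinv_neq_0_compat; lra]. field_simplify; lra.
Qed.

Lemma px_boundary y : px 0 y = 0.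
Proof.
  apply (filterlim_locally_unique (F := at_right 0) (fun x => px x y));
    [apply cont_Hbar_at_right, px_cont |].
  apply filterlim_ext_loc with (fun x => x * (pxx x y + pyy x y)).
  - exists (mkposreal 1 Rlt_0_1). intros x _ Hx. symmetry. apply px_eq_x_laplacian, Hx.
  - replace 0 with (mult 0 (plus (pxx 0 y) (pyy 0 y))) at 2 by (unfold mult; simpl; ring).
    apply (filterlim_comp_2 (G := locally 0) (H := locally (plus (pxx 0 y) (pyy 0 y)))
      (fun x => x) (fun x => pxx x y + pyy x y) mult);
      [| | exact (@filterlim_mult R_AbsRing 0 (plus (pxx 0 y) (pyy 0 y)))].
    + intros P [eps HP]. exists eps. intros x Hx _. apply HP, Hx.
    + apply (filterlim_comp_2 (G := locally (pxx 0 y)) (H := locally (pyy 0 y))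
        (fun x => pxx x y) (fun x => pyy x y) plus);
        [| | exact (@filterlim_plus R_AbsRing R_NormedModule (pxx 0 y) (pyy 0 y))];
        apply cont_Hbar_at_right; assumption.
Qed.

(** Cauchy's mean value theorem, twice, using [phi = phi_x = 0] on [x = 0]. *)
Lemma phi_div_sq_mean_value x y : 0 < x -> exists c, 0 < c < x /\ phi x y / x ^ 2 = pxx c y / 2.
Proof.
  intros Hx.
  (* Composing with [Rabs] turns one-sided continuity at [0] into continuity. *)
  destruct (cauchy_mvt (fun t => phi (Rabs t) y) (fun t => t ^ 2) (fun t => px t y) (fun t => 2 * t)
    0 x Hx) as [c1 [Hc1 E1]].
  { intros t Ht. apply (derivable_pt_lim_locally_ext (fun t => phi t y) _ t 0 x); [lra | |].
    - intros z Hz. rewrite Rabs_right; lra.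
    - apply phi_dx. lra. }
  { intros t _. replace (2 * t) with (INR 2 * t ^ pred 2) by (simpl; ring). apply derivable_pt_lim_pow. }
  { intros t _. apply continuity_pt_abs_slice, phi_cont. }
  { intros t _. apply derivable_continuous_pt, derivable_pt_pow. }
  destruct (cauchy_mvt (fun t => px (Rabs t) y) (fun t => t) (fun t => pxx t y) (fun _ => 1)
    0 c1 (proj1 Hc1)) as [c2 [Hc2 E2]].
  { intros t Ht. apply (derivable_pt_lim_locally_ext (fun t => px t y) _ t 0 c1); [lra | |].
    - intros z Hz. rewrite Rabs_right; lra.
    - apply px_dx. lra. }
  { intros t _. apply derivable_pt_lim_id. }
  { intros t _. apply continuity_pt_abs_slice, px_cont. }
  { intros t _. apply derivable_continuous_pt, derivable_pt_id. }
  exists c2. split; [lra |].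
  rewrite !Rabs_right, phi_boundary in E1 by lra.
  rewrite !Rabs_right, px_boundary in E2 by lra.
  assert (Hpx : px c1 y = c1 * pxx c2 y) by lra.
  rewrite Hpx in E1. simpl in E1.
  apply (Rmult_eq_reg_r (2 * c1 * x ^ 2)); [| pose proof (pow_lt x 2 Hx); nra].
  field_simplify; [| lra]. simpl. nra.
Qed.

Lemma x2_quotient_cont : cont_Hbar (x2_quotient phi pxx).
Proof.
  intros x y Hx. destruct (Rle_lt_or_eq_dec _ _ Hx) as [Hx' | <-].
  - apply continuity_2d_pt_Hbar_at.
    apply (continuity_2d_pt_ext_loc (fun u v => phi u v * / u ^ 2)).
    + exists (mkposreal _ Hx'). intros u v Hu _. simpl in Hu. apply Rabs_def2 in Hu.
      rewrite x2_quotient_pos by lra. reflexivity.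
    + apply continuity_2d_pt_mult; [apply cont_Hbar_continuity_2d_pt; assumption |].
      apply continuity_2d_pt_lift1, continuity_pt_inv; [| apply pow_nonzero; lra].
      apply derivable_continuous_pt, derivable_pt_pow.
  - intros eps Heps.
    destruct (pxx_cont 0 y (Rle_refl _) (2 * eps)) as [d [Hd H1]]; [lra |].
    exists d. split; [exact Hd |]. intros x' y' Hx' Hxd Hyd.
    assert (Hc : exists c, 0 <= c <= x' /\ x2_quotient phi pxx x' y' = pxx c y' / 2).
    { destruct (Rle_lt_or_eq_dec _ _ Hx') as [Hp | <-].
      - destruct (phi_div_sq_mean_value x' y' Hp) as [c [Hc E]].
        exists c. rewrite x2_quotient_pos by exact Hp. split; [lra | exact E].
      - exists 0. rewrite x2_quotient_0. split; [lra | reflexivity]. }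
    destruct Hc as [c [Hc ->]]. rewrite x2_quotient_0.
    rewrite Rminus_0_r, Rabs_right in Hxd by lra.
    assert (Rabs (pxx c y' - pxx 0 y) < 2 * eps) by (apply H1; [lra | rewrite Rminus_0_r, Rabs_right | ]; lra).
    replace (pxx c y' / 2 - pxx 0 y / 2) with ((pxx c y' - pxx 0 y) / 2) by field.
    rewrite Rabs_div, (Rabs_right 2) by lra. lra.
Qed.

Lemma x2_quotient_nonneg x y : 0 <= x -> 0 <= x2_quotient phi pxx x y.
Proof.
  assert (Hpos : forall x y, 0 < x -> 0 <= x2_quotient phi pxx x y).
  { intros x' y' Hx. rewrite x2_quotient_pos by exact Hx. apply Rmult_le_pos.
    - apply phi_nonneg. lra.
    - apply Rlt_le, Rinv_0_lt_compat, pow_lt, Hx. }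
  intros Hx. destruct (Rle_lt_or_eq_dec _ _ Hx) as [Hx' | <-]; [apply Hpos, Hx' |].
  apply cont_Hbar_boundary_nonneg; [apply x2_quotient_cont | intros; apply Hpos; assumption].
Qed.

Lemma x2_quotient_pde :
  exists fx fy fxx fyy,
    pdx_H (x2_quotient phi pxx) fx /\ pdy_H (x2_quotient phi pxx) fy /\
    pdx_H fx fxx /\ pdy_H fy fyy /\
    forall x y, 0 < x -> fxx x y + fyy x y + 3 / x * fx x y = 0.
Proof.
  assert (Hq : forall u v, 0 < u -> phi u v / u ^ 2 = x2_quotient phi pxx u v)
    by (intros; rewrite x2_quotient_pos; auto).
  exists (fun x y => px x y / x ^ 2 - 2 * phi x y / x ^ 3), (fun x y => py x y / x ^ 2),
    (fun x y => pxx x y / x ^ 2 - 4 * px x y / x ^ 3 + 6 * phi x y / x ^ 4), (fun x y => pyy x y / x ^ 2).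
  repeat split.
  - intros x y Hx. apply (pdx_H_ext_loc (fun u v => phi u v / u ^ 2)); [exact Hx | exact Hq |].
    eapply derivable_pt_lim_eq; [apply (derivable_pt_lim_div_pow (fun t => phi t y)); [apply phi_dx |]; exact Hx |].
    simpl. field. lra.
  - intros x y Hx. apply (pdy_H_ext_loc (fun u v => phi u v / u ^ 2)); [exact Hx | exact Hq |].
    apply (derivable_pt_lim_div_const (fun t => phi x t)), phi_dy, Hx.
  - intros x y Hx. eapply derivable_pt_lim_eq.
    + apply (derivable_pt_lim_minus (fun t => px t y / t ^ 2) (fun t => 2 * phi t y / t ^ 3)).
      * apply (derivable_pt_lim_div_pow (fun t => px t y)); [apply px_dx |]; exact Hx.
      * apply (derivable_pt_lim_div_pow (fun t => 2 * phi t y)); [| exact Hx].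
        apply derivable_pt_lim_scal, phi_dx, Hx.
    + simpl. field. lra.
  - intros x y Hx. apply (derivable_pt_lim_div_const (fun t => py x t)), py_dy, Hx.
  - intros x y Hx. pose proof (phi_pde x y Hx) as E.
    replace (pxx x y / x ^ 2 - 4 * px x y / x ^ 3 + 6 * phi x y / x ^ 4 + pyy x y / x ^ 2 +
      3 / x * (px x y / x ^ 2 - 2 * phi x y / x ^ 3))
      with ((pxx x y + pyy x y - / x * px x y) / x ^ 2) by (field; lra).
    rewrite E. unfold Rdiv. ring.
Qed.

(** ** Interior zeros *)

(** [g = phi / sqrt x] removes the first-order term: [Delta g = (3/4) g / x^2]. *)
Lemma sqrt_weighted_C2 :
  C2_H (fun x y => phi x y * / sqrt x)
    (fun x y => px x y * / sqrt x + phi x y * (- / sqrt x / (2 * x)))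
    (fun x y => py x y * / sqrt x)
    (fun x y => pxx x y * / sqrt x + px x y * (- / sqrt x / (2 * x))
                + (px x y * (- / sqrt x / (2 * x)) + phi x y * (3 / sqrt x / (4 * x ^ 2))))
    (fun x y => pxy x y * / sqrt x + py x y * (- / sqrt x / (2 * x)))
    (fun x y => pyx x y * / sqrt x + py x y * (- / sqrt x / (2 * x)))
    (fun x y => pyy x y * / sqrt x).
Proof.
  assert (Cw : forall x, 0 < x -> continuity_pt (fun t => / sqrt t) x)
    by (intros x Hx; apply derivable_continuous_pt; eexists; apply derivable_pt_lim_inv_sqrt, Hx).
  assert (Cw1 : forall x, 0 < x -> continuity_pt (fun t => - / sqrt t / (2 * t)) x)
    by (intros x Hx; apply derivable_continuous_pt; eexists; apply derivable_pt_lim_inv_sqrt_deriv, Hx).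
  assert (Cw2 : forall x, 0 < x -> continuity_pt (fun t => 3 / sqrt t / (4 * t ^ 2)) x).
  { intros x Hx. apply continuity_pt_div; [| | pose proof (pow_lt x 2 Hx); lra].
    - apply continuity_pt_mult, Cw, Hx. apply continuity_pt_const. intros ? ?; reflexivity.
    - apply continuity_pt_mult; [apply continuity_pt_const; intros ? ?; reflexivity |].
      apply derivable_continuous_pt, derivable_pt_pow. }
  constructor;
    repeat first [ apply cont_H_fun1; assumption | apply cont_H_plus | apply cont_H_mult
                 | apply cont_Hbar_cont_H; assumption ].
  - apply pdx_H_mult_fun1; [exact phi_dx | exact derivable_pt_lim_inv_sqrt].
  - apply pdy_H_mult_fun1, phi_dy.
  - apply (pdx_H_plus (fun x y => px x y * / sqrt x) (fun x y => phi x y * (- / sqrt x / (2 * x))));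
      apply pdx_H_mult_fun1; [exact px_dx | exact derivable_pt_lim_inv_sqrt |
                              exact phi_dx | exact derivable_pt_lim_inv_sqrt_deriv].
  - apply (pdy_H_plus (fun x y => px x y * / sqrt x) (fun x y => phi x y * (- / sqrt x / (2 * x))));
      apply pdy_H_mult_fun1; assumption.
  - apply pdx_H_mult_fun1; [exact py_dx | exact derivable_pt_lim_inv_sqrt].
  - apply pdy_H_mult_fun1, py_dy.
Qed.

Lemma sqrt_weighted_laplacian x y : 0 < x ->
  pxx x y * / sqrt x + px x y * (- / sqrt x / (2 * x))
  + (px x y * (- / sqrt x / (2 * x)) + phi x y * (3 / sqrt x / (4 * x ^ 2)))
  + pyy x y * / sqrt x = 3 / 4 * (phi x y * / sqrt x) / x ^ 2.
Proof.
  intros Hx. pose proof (sqrt_lt_R0 x Hx). pose proof (px_eq_x_laplacian x y Hx) as E.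
  rewrite E. field. lra.
Qed.

Lemma sqrt_weighted_laplacian_le a y x y' : 0 < a -> (x - a) ^ 2 + (y' - y) ^ 2 <= (a / 2) ^ 2 ->
  pxx x y' * / sqrt x + px x y' * (- / sqrt x / (2 * x))
  + (px x y' * (- / sqrt x / (2 * x)) + phi x y' * (3 / sqrt x / (4 * x ^ 2)))
  + pyy x y' * / sqrt x <= 3 / a ^ 2 * (phi x y' * / sqrt x).
Proof.
  intros Ha Hdisk.
  assert (Hx : a / 2 <= x).
  { pose proof (pow2_ge_0 (y' - y)). destruct (Rle_or_lt (a / 2) x); [assumption | nra]. }
  pose proof (sqrt_lt_R0 x ltac:(lra)).
  assert (Hg : 0 <= phi x y' * / sqrt x)
    by (apply Rmult_le_pos; [apply phi_nonneg; lra | apply Rlt_le, Rinv_0_lt_compat; lra]).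
  rewrite sqrt_weighted_laplacian by lra.
  assert (a ^ 2 <= 4 * x ^ 2) by (simpl; nra).
  replace (3 / 4 * (phi x y' * / sqrt x) / x ^ 2) with (3 / (4 * x ^ 2) * (phi x y' * / sqrt x))
    by (field; split; lra).
  apply Rmult_le_compat_r; [exact Hg |].
  apply Rmult_le_compat_l; [lra |]. apply Rinv_le_contravar; [apply pow_lt |]; lra.
Qed.

Lemma phi_zero_halves a y : 0 < a -> phi a y = 0 -> phi (a / 2) y = 0.
Proof.
  intros Ha Hz.
  assert (Hnn : forall x y, 0 < x -> 0 <= phi x y * / sqrt x).
  { intros x y' Hx. apply Rmult_le_pos; [apply phi_nonneg; lra |].
    apply Rlt_le, Rinv_0_lt_compat, sqrt_lt_R0, Hx. }
  assert (Hmean : circle_mean (fun x y => phi x y * / sqrt x) a y (a / 2) <= 0).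
  { assert (Ha2 : 0 < a ^ 2) by (apply pow_lt, Ha).
    apply (circle_mean_subsolution_nonpos _ _ _ _ _ _ _ sqrt_weighted_C2 a y (a / 2) (3 / a ^ 2) Hnn).
    - lra.
    - apply Rlt_le, Rdiv_lt_0_compat; lra.
    - replace (3 / a ^ 2 * (a / 2) ^ 2) with (3 / 4) by (field; lra). lra.
    - intros x y'. apply sqrt_weighted_laplacian_le, Ha.
    - rewrite Hz. ring. }
  assert (Hpi : 0 < PI < 2 * PI) by (pose proof PI_RGT_0; lra).
  pose proof (circle_mean_nonpos_vanishes _ _ _ _ _ _ _ sqrt_weighted_C2 a y (a / 2) PI Hnn
    ltac:(rewrite Rabs_right; lra) Hmean Hpi) as Hzero.
  rewrite cos_PI, sin_PI in Hzero. replace (a + a / 2 * -1) with (a / 2) in Hzero by field.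
  replace (y + a / 2 * 0) with y in Hzero by ring.
  apply Rmult_integral in Hzero. destruct Hzero as [| Hw]; [assumption | exfalso].
  pose proof (Rinv_0_lt_compat _ (sqrt_lt_R0 (a / 2) ltac:(lra))). lra.
Qed.

Lemma x2_quotient_interior_zero a y : 0 < a -> x2_quotient phi pxx a y = 0 -> x2_quotient phi pxx 0 y = 0.
Proof.
  intros Ha Hz. rewrite x2_quotient_pos in Hz by exact Ha.
  assert (Hn : forall n, phi (a / 2 ^ n) y = 0).
  { induction n as [| n IH].
    - replace (a / 2 ^ 0) with a by (simpl; field).
      unfold Rdiv in Hz. apply Rmult_integral in Hz. destruct Hz as [| Hz]; [assumption | exfalso].
      apply (Rinv_neq_0_compat (a ^ 2)); [apply pow_nonzero; lra | exact Hz].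
    - replace (a / 2 ^ S n) with (a / 2 ^ n / 2) by (simpl; field; apply pow_nonzero; lra).
      apply phi_zero_halves; [apply Rdiv_lt_0_compat; [lra | apply pow_lt; lra] | exact IH]. }
  apply Rabs_eq_0, Rle_antisym; [| apply Rabs_pos].
  apply le_epsilon. intros eps Heps. rewrite Rplus_0_l.
  destruct (x2_quotient_cont 0 y (Rle_refl _) eps Heps) as [d [Hd H1]].
  destruct (Pow_x_infinity 2 ltac:(rewrite Rabs_right; lra) (2 * a / d)) as [N HN].
  specialize (HN N (le_n _)). rewrite Rabs_right in HN by (apply Rle_ge, pow_le; lra).
  assert (H2N : 0 < 2 ^ N) by (apply pow_lt; lra).
  assert (Hpos : 0 < a / 2 ^ N) by (apply Rdiv_lt_0_compat; lra).
  assert (Hsmall : a / 2 ^ N < d).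
  { apply (Rmult_lt_reg_r (2 ^ N)); [exact H2N |].
    replace (a / 2 ^ N * 2 ^ N) with a by (field; lra).
    apply Rlt_le_trans with (d * (2 * a / d)); [| apply Rmult_le_compat_l; lra].
    replace (d * (2 * a / d)) with (2 * a) by (field; lra). lra. }
  pose proof (H1 (a / 2 ^ N) y ltac:(lra) ltac:(rewrite Rminus_0_r, Rabs_right; lra)
    ltac:(rewrite Rminus_diag, Rabs_R0; lra)) as A.
  rewrite x2_quotient_pos, Hn in A by exact Hpos.
  replace (0 / (a / 2 ^ N) ^ 2 - x2_quotient phi pxx 0 y) with (- x2_quotient phi pxx 0 y) in A
    by (field; lra).
  rewrite Rabs_Ropp in A. lra.
Qed.

(** ** Boundary zeros *)

Lemma semicircle_angular_derivative b r t : 0 < r -> 0 < t < PI ->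
  derivable_pt_lim
    (fun v => - r * sin v * cos v * px (r * sin v) (b + r * cos v)
              + r * sin v ^ 2 * py (r * sin v) (b + r * cos v) + 2 * cos v * phi (r * sin v) (b + r * cos v)) t
    (r ^ 2 * ((sin t * (sin t * pxx (r * sin t) (b + r * cos t) + cos t * pxy (r * sin t) (b + r * cos t))
              + cos t * (sin t * pyx (r * sin t) (b + r * cos t) + cos t * pyy (r * sin t) (b + r * cos t)))
              * sin t)
     - 2 * (phi (r * sin t) (b + r * cos t) * sin t)).
Proof.
  intros Hr Ht. pose proof (sin_gt_0 t (proj1 Ht) (proj2 Ht)) as Hs.
  eapply derivable_pt_lim_eq.
  - apply (derivable_pt_lim_plus
      (fun v => - r * sin v * cos v * px (r * sin v) (b + r * cos v) + r * sin v ^ 2 * py (r * sin v) (b + r * cos v))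
      (fun v => 2 * cos v * phi (r * sin v) (b + r * cos v))).
    + apply (derivable_pt_lim_plus (fun v => - r * sin v * cos v * px (r * sin v) (b + r * cos v))
                                   (fun v => r * sin v ^ 2 * py (r * sin v) (b + r * cos v))).
      * apply (derivable_pt_lim_mult (fun v => - r * sin v * cos v)).
        -- apply is_derive_Reals; auto_derive; [exact I | reflexivity].
        -- apply derivable_pt_lim_semicircle_t; eassumption.
      * apply (derivable_pt_lim_mult (fun v => r * sin v ^ 2)).
        -- apply is_derive_Reals; auto_derive; [exact I | reflexivity].
        -- apply derivable_pt_lim_semicircle_t; eassumption.
    + apply (derivable_pt_lim_mult (fun v => 2 * cos v)).
      * apply is_derive_Reals; auto_derive; [exact I | reflexivity].
      * apply derivable_pt_lim_semicircle_t; eassumption.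
  - assert (Hx : 0 < r * sin t) by (apply Rmult_lt_0_compat; assumption).
    pose proof (px_eq_x_laplacian _ (b + r * cos t) Hx) as E. cbv beta. rewrite E.
    ring.
Qed.

(** The angular part of the Laplacian integrates to boundary terms, which
    vanish because [phi = 0] on [x = 0]; what remains is the Euler equation
    [r^2 N'' = 2 N] for [N = semicircle_mean phi b]. *)
Lemma semicircle_euler_identity b r : 0 < r ->
  r ^ 2 * semicircle_hessian pxx pxy pyx pyy b r = 2 * semicircle_mean phi b r.
Proof.
  intros Hr. unfold semicircle_hessian, semicircle_mean.
  set (W := fun t => (Rabs (sin t) * (Rabs (sin t) * pxx (r * Rabs (sin t)) (b + r * cos t)
                                   + cos t * pxy (r * Rabs (sin t)) (b + r * cos t))
                    + cos t * (Rabs (sin t) * pyx (r * Rabs (sin t)) (b + r * cos t)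
                                   + cos t * pyy (r * Rabs (sin t)) (b + r * cos t))) * Rabs (sin t)).
  set (U := fun t => phi (r * Rabs (sin t)) (b + r * cos t) * Rabs (sin t)).
  set (G := fun t => - r * Rabs (sin t) * cos t * px (r * Rabs (sin t)) (b + r * cos t)
                     + r * Rabs (sin t) ^ 2 * py (r * Rabs (sin t)) (b + r * cos t)
                     + 2 * cos t * phi (r * Rabs (sin t)) (b + r * cos t)).
  assert (Cont : forall h, cont_Hbar h -> forall t, continuity_pt (fun v => h (r * Rabs (sin v)) (b + r * cos v)) t)
    by (intros; apply continuity_pt_semicircle; assumption).
  assert (CW : forall t, continuity_pt W t).
  { intro t. unfold W. repeat first [apply continuity_pt_plus | apply continuity_pt_mult
      | apply continuity_cos | apply continuity_pt_abs_sin | apply Cont; assumption]. }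
  assert (CU : forall t, continuity_pt U t)
    by (intro t; apply continuity_pt_mult; [apply Cont, phi_cont | apply continuity_pt_abs_sin]).
  assert (Hangular : RInt (fun t => r ^ 2 * W t - 2 * U t) 0 PI = G PI - G 0).
  { apply RInt_derive_open; [apply PI_RGT_0 | | |].
    - intro t. apply continuity_pt_filterlim, continuity_pt_minus; apply continuity_pt_mult; auto;
        apply continuity_pt_const; intros ? ?; reflexivity.
    - intros t _. unfold G.
      repeat first [apply continuity_pt_plus | apply continuity_pt_mult | apply continuity_pt_opp
        | apply continuity_cos | apply continuity_pt_abs_sin | apply Cont; assumption
        | apply continuity_pt_const; intros ? ?; reflexivity
        | apply derivable_continuous_pt, derivable_pt_pow].
    - intros t Ht. pose proof (sin_gt_0 t (proj1 Ht) (proj2 Ht)).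
      apply (derivable_pt_lim_locally_ext
        (fun v => - r * sin v * cos v * px (r * sin v) (b + r * cos v)
                  + r * sin v ^ 2 * py (r * sin v) (b + r * cos v) + 2 * cos v * phi (r * sin v) (b + r * cos v))
        G t 0 PI _ Ht).
      { intros z Hz. unfold G. rewrite (Rabs_right (sin z)) by (apply Rle_ge, Rlt_le, sin_gt_0; lra).
        reflexivity. }
      unfold W, U. rewrite (Rabs_right (sin t)) by lra.
      apply semicircle_angular_derivative; assumption. }
  assert (HG : forall t, sin t = 0 -> G t = 0).
  { intros t Hs. unfold G. rewrite Hs, Rabs_R0, !Rmult_0_r, phi_boundary. ring. }
  rewrite (HG PI sin_PI), (HG 0 sin_0), Rminus_0_r in Hangular.
  rewrite RInt_scal_minus in Hangular by (apply ex_RInt_continuity_pt; assumption).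
  fold W U. lra.
Qed.

Lemma phi_le_near_boundary_zero b : x2_quotient phi pxx 0 b = 0 ->
  forall eps, 0 < eps -> exists d, 0 < d /\
    forall x y, 0 <= x -> x < d -> Rabs (y - b) < d -> phi x y <= eps * x ^ 2.
Proof.
  intros Hz eps Heps. destruct (x2_quotient_cont 0 b (Rle_refl _) eps Heps) as [d [Hd H1]].
  exists d. split; [exact Hd |]. intros x y Hx Hxd Hyd.
  destruct (Rle_lt_or_eq_dec _ _ Hx) as [Hx' | <-].
  - pose proof (H1 x y Hx ltac:(rewrite Rminus_0_r, Rabs_right; lra) Hyd) as A.
    rewrite Hz, Rminus_0_r, x2_quotient_pos in A by exact Hx'.
    apply Rabs_def2 in A. destruct A as [A _]. pose proof (pow_lt x 2 Hx').
    apply (Rmult_lt_compat_r (x ^ 2)) in A; [| lra].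
    unfold Rdiv in A. rewrite Rmult_assoc, Rinv_l, Rmult_1_r in A by lra. lra.
  - rewrite phi_boundary. simpl. lra.
Qed.

Lemma semicircle_mean_little_o b : x2_quotient phi pxx 0 b = 0 ->
  forall eps, 0 < eps -> exists d, 0 < d /\ forall r, 0 < r < d -> semicircle_mean phi b r <= eps * r ^ 2.
Proof.
  intros Hz eps Heps. pose proof PI_RGT_0 as Hpi.
  destruct (phi_le_near_boundary_zero b Hz (eps / PI)) as [d [Hd H1]]; [apply Rdiv_lt_0_compat; lra |].
  exists d. split; [exact Hd |]. intros r Hr.
  apply Rle_trans with (RInt (fun _ => eps / PI * r ^ 2) 0 PI).
  - apply RInt_le; [lra | | apply ex_RInt_const |].
    + apply ex_RInt_continuity_pt. intro t.
      apply continuity_pt_mult; [apply continuity_pt_semicircle; [exact phi_cont | lra] |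
        apply continuity_pt_abs_sin].
    + intros t _. pose proof (Rabs_pos (sin t)) as Hs0.
      assert (Hs1 : Rabs (sin t) <= 1) by (apply Rabs_le, SIN_bound).
      assert (Hc : Rabs (cos t) <= 1) by (apply Rabs_le, COS_bound).
      assert (Hx : r * Rabs (sin t) <= r) by nra.
      assert (Hy : Rabs (b + r * cos t - b) < d).
      { replace (b + r * cos t - b) with (r * cos t) by ring.
        rewrite Rabs_mult, Rabs_right by lra. nra. }
      pose proof (H1 (r * Rabs (sin t)) (b + r * cos t) ltac:(nra) ltac:(lra) Hy) as Hphi.
      pose proof (phi_nonneg (r * Rabs (sin t)) (b + r * cos t) ltac:(nra)).
      assert (0 <= eps / PI) by (apply Rlt_le, Rdiv_lt_0_compat; lra).
      assert ((r * Rabs (sin t)) ^ 2 <= r ^ 2) by (apply pow_incr; nra).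
      apply Rle_trans with (eps / PI * (r * Rabs (sin t)) ^ 2 * Rabs (sin t)); [nra |].
      apply Rle_trans with (eps / PI * r ^ 2 * Rabs (sin t)); [| nra].
      apply Rmult_le_compat_r; [lra |]. apply Rmult_le_compat_l; lra.
  - rewrite RInt_const. unfold scal; simpl. unfold mult; simpl. right. field. lra.
Qed.

Lemma semicircle_mean_vanishes b : x2_quotient phi pxx 0 b = 0 ->
  forall r, 0 < r -> semicircle_mean phi b r = 0.
Proof.
  intros Hz. apply (euler_ode_nonneg_small_zero _ (semicircle_flux px py b)
    (semicircle_hessian pxx pxy pyx pyy b)).
  - intros r Hr. apply is_derive_Reals, is_derive_semicircle_mean; assumption.
  - intros r Hr. apply is_derive_Reals, is_derive_semicircle_flux; assumption.
  - intros r Hr. apply semicircle_euler_identity, Hr.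
  - intros r Hr. apply RInt_ge_0; [apply Rlt_le, PI_RGT_0 | |].
    + apply ex_RInt_continuity_pt. intro t.
      apply continuity_pt_mult; [apply continuity_pt_semicircle; assumption | apply continuity_pt_abs_sin].
    + intros t _. apply Rmult_le_pos; [apply phi_nonneg | apply Rabs_pos].
      apply Rmult_le_pos; [lra | apply Rabs_pos].
  - apply semicircle_mean_little_o, Hz.
Qed.

Lemma semicircle_polar_coordinates b x y : 0 < x ->
  exists r t, 0 < r /\ 0 < t < PI /\ r * Rabs (sin t) = x /\ b + r * cos t = y.
Proof.
  intros Hx. set (z := (y - b) / x).
  assert (Hq : 0 < 1 + z²) by (pose proof (Rle_0_sqr z); lra).
  pose proof (sqrt_lt_R0 _ Hq) as Hsq.
  pose proof (atan_bound z).
  exists (x * sqrt (1 + z²)), (PI / 2 - atan z).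
  rewrite sin_shift, cos_shift, cos_atan, sin_atan, Rabs_right
    by (apply Rle_ge, Rlt_le, Rdiv_lt_0_compat; lra).
  repeat split; [apply Rmult_lt_0_compat; lra | lra | lra | field; lra |].
  replace (x * sqrt (1 + z²) * (z / sqrt (1 + z²))) with (x * z) by (field; lra).
  unfold z. field. lra.
Qed.

Lemma phi_vanishes_of_boundary_zero b : x2_quotient phi pxx 0 b = 0 ->
  forall x y, 0 < x -> phi x y = 0.
Proof.
  intros Hz x y Hx.
  destruct (semicircle_polar_coordinates b x y Hx) as [r [t [Hr [Ht [Ex Ey]]]]].
  destruct (Rle_lt_or_eq_dec _ _ (phi_nonneg x y (Rlt_le _ _ Hx))) as [Hp | Hp]; [exfalso | auto].
  enough (Hpos : 0 < semicircle_mean phi b r)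
    by (rewrite semicircle_mean_vanishes in Hpos by assumption; lra).
  apply (RInt_gt_0_at _ 0 PI t Ht).
  - intro s. apply continuity_pt_filterlim, continuity_pt_mult;
      [apply continuity_pt_semicircle; assumption | apply continuity_pt_abs_sin].
  - intros s _. apply Rmult_le_pos; [apply phi_nonneg | apply Rabs_pos].
    apply Rmult_le_pos; [lra | apply Rabs_pos].
  - rewrite Ex, Ey. apply Rmult_lt_0_compat; [exact Hp |].
    destruct (Rle_lt_or_eq_dec _ _ (Rabs_pos (sin t))); [assumption | nra].
Qed.

Lemma x2_quotient_positive : (exists x y, 0 < x /\ phi x y <> 0) ->
  forall x y, 0 <= x -> 0 < x2_quotient phi pxx x y.
Proof.
  intros [x1 [y1 [Hx1 Hn]]] x y Hx.
  destruct (Rle_lt_or_eq_dec _ _ (x2_quotient_nonneg x y Hx)) as [| Hz]; [assumption | exfalso].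
  assert (Hz0 : x2_quotient phi pxx 0 y = 0).
  { destruct (Rle_lt_or_eq_dec _ _ Hx) as [Hx' | <-]; [| auto].
    apply (x2_quotient_interior_zero x); [exact Hx' | auto]. }
  apply Hn, (phi_vanishes_of_boundary_zero y Hz0 x1 y1 Hx1).
Qed.

End HalfPlaneSolution.

Theorem lemma4p1 (phi : R -> R -> R)
  (Hreg2 : C2_Hbar phi)
  (Hsmooth : Cinf_H phi)
  (Hnonneg : forall x y, 0 <= x -> 0 <= phi x y)
  (Hnonzero : exists x y, 0 <= x /\ phi x y <> 0)
  (Hbdry : forall y, phi 0 y = 0)
  (Hpde : exists px py pxx pyy,
      pdx_H phi px /\ pdy_H phi py /\ pdx_H px pxx /\ pdy_H py pyy /\
      forall x y, 0 < x -> pxx x y + pyy x y - / x * px x y = 0) :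
  exists f : R -> R -> R,
    (forall x y, 0 < x -> f x y = phi x y / x ^ 2) /\
    cont_Hbar f /\ Cinf_H f /\
    (exists fx fy fxx fyy,
      pdx_H f fx /\ pdy_H f fy /\ pdx_H fx fxx /\ pdy_H fy fyy /\
      forall x y, 0 < x -> fxx x y + fyy x y + 3 / x * fx x y = 0) /\
    (forall x y, 0 <= x -> 0 < f x y).
Proof.
  destruct Hreg2 as [Hc [px [py [pxx [pxy [pyx [pyy
    (Dx & Dy & Dxx & Dxy & Dyx & Dyy & Cx & Cy & Cxx & Cxy & Cyx & Cyy)]]]]]]].
  assert (Hlap : forall x y, 0 < x -> pxx x y + pyy x y - / x * px x y = 0).
  { destruct Hpde as (qx & qy & qxx & qyy & Qx & Qy & Qxx & Qyy & Q).
    intros x y Hx.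
    assert (Ex : forall u v, 0 < u -> qx u v = px u v) by (intros; apply (pdx_H_unique phi); assumption).
    assert (Ey : forall u v, 0 < u -> qy u v = py u v) by (intros; apply (pdy_H_unique phi); assumption).
    rewrite <- (pdx_H_unique px qxx pxx x y (pdx_H_ext _ _ _ Ex Qxx) Dxx Hx),
      <- (pdy_H_unique py qyy pyy x y (pdy_H_ext _ _ _ Ey Qyy) Dyy Hx), <- Ex by exact Hx.
    apply Q, Hx. }
  assert (Hnonzero' : exists x y, 0 < x /\ phi x y <> 0).
  { destruct Hnonzero as [x [y [Hx Hn]]]. exists x, y. split; [| exact Hn].
    destruct (Rle_lt_or_eq_dec _ _ Hx) as [| <-]; [assumption | rewrite Hbdry in Hn; lra]. }
  exists (x2_quotient phi pxx). split; [| split; [| split; [| split]]].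
  - apply x2_quotient_pos.
  - eapply x2_quotient_cont; eassumption.
  - apply x2_quotient_Cinf, Hsmooth.
  - eapply x2_quotient_pde; eassumption.
  - eapply x2_quotient_positive; eassumption.
Qed.
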